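(* Let $p=k_{w_1}+k_{w_2}$ and let $W_1\in\mathbb{R}^{p\times n}$ be a constant (unknown) matrix. Along a given closed-loop trajectory, suppose the state $x:[0,\infty)\to\mathbb{R}^n$ satisfies $$\dot x(t)=W_1^T\Phi(t)+\varepsilon_T(t),$$ where $\Phi:[0,\infty)\to\mathbb{R}^p$ (the regressor $\Phi(t)=\Phi(x(t),u(t))$) and $\varepsilon_T:[0,\infty)\to\mathbb{R}^n$ are piecewise continuous and bounded, $\|\Phi(t)\|\le p_1$, $\|\varepsilon_T(t)\|\le p_2$. Fix scalars $k>0$, $l>0$ and define filtered signals by $$k\dot\Phi_f+\Phi_f=\Phi,\quad k\dot x_f+x_f=x,\quad k\dot\varepsilon_{Tf}+\varepsilon_{Tf}=\varepsilon_T,$$ with $\Phi_f(0)=0$, $x_f(0)=x(0)$, $\varepsilon_{Tf}(0)=0$, and $$\Pi(t)=\int_0^t e^{-l(t-s)}\Phi_f(s)\Phi_f^T(s)\,ds,\qquad K(t)=\int_0^t e^{-l(t-s)}\Phi_f(s)\dot x_f(s)^T\,ds .$$ Fix recorded times $t_1,\dots,t_N$ (with $N\ge p$) and set $\Pi_j=\Pi(t_j)$, $K_j=K(t_j)$. Let $\Gamma_1\in\mathbb{R}^{p\times p}$ be a constant symmetric positive definite matrix, and let the estimate $\hat W_1(t)\in\mathbb{R}^{p\times n}$ evolve according to $$\dot{\hat W}_1=-\Gamma_1\Big(\Pi\hat W_1-K+\sum_{j=1}^N\big(\Pi_j\hat W_1-K_j\big)\Big).$$ Let $\tilde W_1=W_1-\hat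 W_1$ and $P(t)=\Pi(t)+\sum_{j=1}^N\Pi_j$. Assume $\Phi$ is persistently excited and that there exist $T_1>0$ and $\lambda_0>0$ with $\lambda_{\min}(P(t))\ge\lambda_0$ for all $t\ge T_1$. Then, with $V_1=\tfrac12\operatorname{tr}(\tilde W_1^T\Gamma_1^{-1}\tilde W_1)$: (i) if $\varepsilon_T\equiv0$, then $\dot V_1\le-\lambda_0\|\tilde W_1\|^2$ for $t\ge T_1$ and $\tilde W_1(t)\to0$ as $t\to\infty$ (asymptotic stability of $\tilde W_1=0$); (ii) in general, with $y_1(t)=-\int_0^te^{-l(t-\tau)}\Phi_f(\tau)\varepsilon_{Tf}^T(\tau)d\tau$, $y_{1j}=y_1(t_j)$, there is a constant $\nu_1$ with $\|y_1(t)+\sum_{j=1}^Ny_{1j}\|\le\nu_1$ for all $t$, and for $t\ge T_1$, $\dot V_1\le-\lambda_0\|\tilde W_1\|^2+\nu_1\|\tilde W_1\|$; hence $\dot V_1<0$ whenever $\|\tilde W_1\|>\nu_1/\lambda_0$, and $\tilde W_1$ is uniformly ultimately bounded.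
   Context: Norms of matrices are Frobenius norms. Persistent excitation of $\Phi$ means: there exist $\alpha_1,\alpha_2,T_1>0$ such that $\alpha_1I\le\int_t^{t+T_1}\Phi(\tau)\Phi^T(\tau)d\tau\le\alpha_2I$ for all $t>0$. Uniform ultimate boundedness (UUB) of a signal means there is a bound $b$ and for every initial condition a finite time after which the signal's norm stays below $b$. The model arises from a control-affine system $\dot x=f(x)+g(x)u$ with $f(x)=w_1\xi_1(x)+\epsilon_f$, $g(x)=w_2\xi_2(x)+\epsilon_g$, $W_1=[w_1^T;w_2^T]$, $\Phi=[\xi_1^T,u^T\xi_2^T]^T$, $\varepsilon_T=\epsilon_f+\epsilon_gu$. *)

(* Matrices/vectors are represented as functions nat -> nat -> R / nat -> R;
   dimensions are passed explicitly and only in-range entries are ever used. *)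
From Stdlib Require Import Reals Lra.
Open Scope R_scope.

Definition vec := nat -> R.
Definition mat := nat -> nat -> R.

Fixpoint fsum (N : nat) (f : nat -> R) : R :=
  match N with O => 0 | S N' => fsum N' f + f N' end.

Definition mmul (q : nat) (A B : mat) : mat :=
  fun i j => fsum q (fun r => A i r * B r j).
Definition mvec (q : nat) (A : mat) (v : vec) : vec :=
  fun i => fsum q (fun r => A i r * v r).
Definition madd (A B : mat) : mat := fun i j => A i j + B i j.
Definition msub (A B : mat) : mat := fun i j => A i j - B i j.
Definition mopp (A : mat) : mat := fun i j => - A i j.
Definition mscal (c : R) (A : mat) : mat := fun i j => c * A i j.
Definition mtr (A : mat) : mat := fun i j => A j i.
Definition msum (N : nat) (F : nat -> mat) : mat :=
  fun i j => fsum N (fun q => F q i j).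
Definition idm : mat := fun i j => if Nat.eqb i j then 1 else 0.
Definition trace (m : nat) (A : mat) : R := fsum m (fun i => A i i).

Definition frob (m n : nat) (A : mat) : R :=
  sqrt (fsum m (fun i => fsum n (fun j => A i j ^ 2))).
Definition vnorm (m : nat) (v : vec) : R := sqrt (fsum m (fun i => v i ^ 2)).

Definition quad (m : nat) (A : mat) (v : vec) : R :=
  fsum m (fun i => fsum m (fun j => v i * A i j * v j)).
Definition nonzero_vec (m : nat) (v : vec) : Prop := exists i, (i < m)%nat /\ v i <> 0.
Definition symmetric (m : nat) (A : mat) : Prop :=
  forall i j, (i < m)%nat -> (j < m)%nat -> A i j = A j i.
Definition pos_def (m : nat) (A : mat) : Prop :=
  forall v, nonzero_vec m v -> 0 < quad m A v.
Definition is_inverse (m : nat) (A B : mat) : Prop :=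
  forall i j, (i < m)%nat -> (j < m)%nat ->
    mmul m A B i j = idm i j /\ mmul m B A i j = idm i j.
Definition loewner_le (m : nat) (A B : mat) : Prop :=
  forall v, 0 <= quad m (msub B A) v.

(* (real) eigenvalues; lambda_min(A) >= lam0 for the symmetric matrices used *)
Definition is_eigenvalue (m : nat) (A : mat) (lam : R) : Prop :=
  exists v, nonzero_vec m v /\
    forall i, (i < m)%nat -> fsum m (fun j => A i j * v j) = lam * v i.
Definition lambda_min_ge (m : nat) (A : mat) (lam0 : R) : Prop :=
  forall lam, is_eigenvalue m A lam -> lam0 <= lam.

Definition cont_nonneg (f : R -> R) : Prop :=
  forall t, 0 <= t -> forall eps, 0 < eps -> exists delta, 0 < delta /\
    forall s, 0 <= s -> Rabs (s - t) < delta -> Rabs (f s - f t) < eps.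

Definition right_lim (f : R -> R) (a L : R) : Prop :=
  forall eps, 0 < eps -> exists delta, 0 < delta /\
    forall s, a < s < a + delta -> Rabs (f s - L) < eps.
Definition left_lim (f : R -> R) (b L : R) : Prop :=
  forall eps, 0 < eps -> exists delta, 0 < delta /\
    forall s, b - delta < s < b -> Rabs (f s - L) < eps.

Definition piecewise_continuous (f : R -> R) : Prop :=
  forall T, 0 < T -> exists (m : nat) (s : nat -> R),
    s O = 0 /\ s m = T /\
    forall i, (i < m)%nat ->
      s i < s (S i) /\
      (forall t, s i < t < s (S i) -> continuity_pt f t) /\
      (exists L, right_lim f (s i) L) /\
      (exists L, left_lim f (s (S i)) L).

Definition pc_vec (m : nat) (f : R -> vec) : Prop :=
  forall i, (i < m)%nat -> piecewise_continuous (fun t => f t i).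
Definition cont_at_vec (m : nat) (f : R -> vec) (t : R) : Prop :=
  forall i, (i < m)%nat -> continuity_pt (fun s => f s i) t.

Definition is_integral (f : R -> R) (a b v : R) : Prop :=
  exists pr : Riemann_integrable f a b, RiemannInt pr = v.

Definition persistently_exciting (m : nat) (Phi : R -> vec) : Prop :=
  exists a1 a2 T, 0 < a1 /\ 0 < a2 /\ 0 < T /\
    forall t, 0 < t -> exists M : mat,
      (forall i j, (i < m)%nat -> (j < m)%nat ->
         is_integral (fun s => Phi s i * Phi s j) t (t + T) (M i j)) /\
      loewner_le m (mscal a1 idm) M /\ loewner_le m M (mscal a2 idm).

Definition estimator_law (p n : nat) (Gamma : mat) (Pi K : R -> mat)
    (N : nat) (ts : nat -> R) (What : R -> mat) : Prop :=
  forall t, 0 < t -> forall i j, (i < p)%nat -> (j < n)%nat ->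
    derivable_pt_lim (fun s => What s i j) t
      (mopp (mmul p Gamma
         (madd (msub (mmul p (Pi t) (What t)) (K t))
               (msum N (fun q => msub (mmul p (Pi (ts q)) (What t)) (K (ts q))))))
       i j).

Definition V1 (p n : nat) (Ginv : mat) (Wt : mat) : R :=
  / 2 * trace n (mmul p (mtr Wt) (mmul p Ginv Wt)).

From Stdlib Require Import Reals.

(* Filtering the state equation gives dxf/dt = W1^T Phif + epsf, hence
   K = Pi W1 - y1, and the update law becomes dWt/dt = - Gamma (P Wt - Y) for the
   error Wt = W1 - What, with P = Pi + sum_j Pi_j and Y = y1 + sum_j y1_j.  So
   dV1/dt = - tr (Wt^T P Wt) + tr (Wt^T Y) <= - lam0 |Wt|^2 + nu1 |Wt|: the first
   term by the Rayleigh quotient (its minimum on the unit sphere exists by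
   compactness and is an eigenvalue), the second by Cauchy-Schwarz, where nu1
   bounds |Y| because the stable first-order filters keep Phif and epsf within the
   bounds p1, p2 of their inputs.  As V1 is comparable to |Wt|^2, comparison
   arguments give convergence when epsT = 0 and ultimate boundedness in general. *)

Module SphereMinimum.
From mathcomp Require Import all_boot all_order all_algebra.
From mathcomp Require Import all_classical all_reals all_analysis.
From mathcomp Require Import Rstruct Rstruct_topology.
From mathcomp Require Import lra.
Import Order.TTheory GRing.Theory Num.Theory.
Local Open Scope classical_set_scope.
Local Open Scope ring_scope.

Lemma rV_quad_min (m : nat) (A : 'I_m.+1 -> 'I_m.+1 -> R) :
  exists2 c : 'rV[R]_m.+1, \sum_i c ord0 i ^+ 2 = 1 &
    forall v : 'rV[R]_m.+1, \sum_i v ord0 i ^+ 2 = 1 ->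
      \sum_i \sum_j c ord0 i * A i j * c ord0 j <= \sum_i \sum_j v ord0 i * A i j * v ord0 j.
Proof.
pose g := fun v : 'rV[R]_m.+1 => \sum_i v ord0 i ^+ 2.
pose f := fun v : 'rV[R]_m.+1 => \sum_i \sum_j v ord0 i * A i j * v ord0 j.
pose S := g @^-1` [set (1:R)].
have gc : continuous g.
  apply: (@continuous_big R _ +%R 0 xpredT); first exact: (@add_continuous R^o).
  by move=> i _ x; apply: continuousM; exact: coord_continuous.
have fc : continuous f.
  apply: (@continuous_big R _ +%R 0 xpredT); first exact: (@add_continuous R^o); move=> i _.
  apply: (@continuous_big R _ +%R 0 xpredT); first exact: (@add_continuous R^o); move=> j _ x.
  apply: (@continuousM R _ (fun v : 'rV[R]_m.+1 => v ord0 i * A i j) (fun v => v ord0 j)).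
  - apply: (@continuousM R _ (fun v : 'rV[R]_m.+1 => v ord0 i) (fun v => A i j)).
      exact: coord_continuous.
    exact: cst_continuous.
  - exact: coord_continuous.
have Sne : S !=set0.
  exists (\row_j (if j == ord0 then (1:R) else 0)).
  rewrite /S /g /= (bigD1 ord0) //= big1 ?mxE ?eqxx ?addr0 ?expr1n //.
  by move=> i /negPf Hi; rewrite mxE Hi expr0n.
have Scl : closed S.
  apply: preimage_closed; last exact: closed_eq.
  by move=> x _; apply: gc.
have Sb : bounded_set S.
  exists 1; split; first by rewrite realE ler01.
  move=> M M1 v Sv /=.
  apply: (le_trans _ (ltW M1)).
  change (mx_norm v <= 1); rewrite mx_normrE; apply/bigmax_leP; split => //.
  move=> [i0 i] _ /=; rewrite (ord1 i0).
  have : v ord0 i ^+ 2 <= g v.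
    rewrite /g (bigD1 i) //= lerDl; apply: sumr_ge0 => k _; exact: sqr_ge0.
  rewrite Sv => H.
  have H1 : v ord0 i ^+ 2 <= 1 := H.
  rewrite ler_norml; apply/andP; split; nra.
have [c cS cmin] := EVT_min_rV Sne (bounded_closed_compact Sb Scl) (continuous_subspaceT fc).
exists c; first by move: cS; rewrite inE.
by move=> v Hv; apply: cmin; rewrite inE.
Qed.

Lemma fsum_big (m : nat) (g : nat -> R) : fsum m g = \sum_(i < m) g i.
Proof.
elim: m => [|m IH]; first by rewrite big_ord0.
by rewrite big_ord_recr /= IH.
Qed.

Lemma quad_sphere_min (m : nat) (A : mat) : (0 < m)%N ->
  exists u : vec, fsum m (fun i => pow (u i) 2) = R1 /\
   forall v : vec, fsum m (fun i => pow (v i) 2) = R1 -> Rle (quad m A u) (quad m A v).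
Proof.
case: m => [//|m] _.
have [c c1 cmin] := rV_quad_min m (fun i j : 'I_m.+1 => A i j).
pose u : vec := fun i => c ord0 (inord i).
have uE : forall o : 'I_m.+1, u o = c ord0 o by move=> o; rewrite /u inord_val.
have quadE : forall (w : vec) (r : 'rV[R]_m.+1), (forall o : 'I_m.+1, w o = r ord0 o) ->
    quad m.+1 A w = \sum_(i < m.+1) \sum_(j < m.+1) r ord0 i * A i j * r ord0 j.
  move=> w r Hw; rewrite /quad fsum_big; apply: eq_bigr => i _; rewrite fsum_big.
  by apply: eq_bigr => j _; rewrite !Hw.
exists u; split.
  by rewrite fsum_big; apply: etrans c1; apply: eq_bigr => i _; rewrite uE RpowE.
move=> v v1; apply/RleP.
rewrite (quadE u c uE) (quadE v (\row_(j < m.+1) v j)); last by move=> o; rewrite mxE.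
apply: cmin; apply: etrans v1; rewrite fsum_big.
by apply: eq_bigr => i _; rewrite mxE RpowE.
Qed.

End SphereMinimum.

Open Scope R_scope.
From Stdlib Require Import Lra Lia Psatz List Classical ClassicalEpsilon.

Set Bullet Behavior "Strict Subproofs".

Lemma fsum_ext N f g : (forall i, (i < N)%nat -> f i = g i) -> fsum N f = fsum N g.
Proof.
  induction N as [|N IH]; intros H; simpl; [reflexivity|].
  rewrite IH, (H N) by (intros; try apply H; lia). reflexivity.
Qed.

Lemma fsum_plus N f g : fsum N (fun i => f i + g i) = fsum N f + fsum N g.
Proof. induction N; simpl; [ring | rewrite IHN; ring]. Qed.

Lemma fsum_minus N f g : fsum N (fun i => f i - g i) = fsum N f - fsum N g.
Proof. induction N; simpl; [ring | rewrite IHN; ring]. Qed.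

Lemma fsum_opp N f : fsum N (fun i => - f i) = - fsum N f.
Proof. induction N; simpl; [ring | rewrite IHN; ring]. Qed.

Lemma fsum_scal N c f : fsum N (fun i => c * f i) = c * fsum N f.
Proof. induction N; simpl; [ring | rewrite IHN; ring]. Qed.

Lemma fsum_scalr N c f : fsum N (fun i => f i * c) = fsum N f * c.
Proof. induction N; simpl; [ring | rewrite IHN; ring]. Qed.

Lemma fsum_const N c : fsum N (fun _ => c) = INR N * c.
Proof. induction N; simpl fsum; [simpl; ring | rewrite IHN, S_INR; ring]. Qed.

Lemma fsum_zero N f : (forall i, (i < N)%nat -> f i = 0) -> fsum N f = 0.
Proof. intros H. rewrite (fsum_ext N f (fun _ => 0)), fsum_const by auto. ring. Qed.

Lemma fsum_swap N M (f : nat -> nat -> R) :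
  fsum N (fun i => fsum M (fun j => f i j)) = fsum M (fun j => fsum N (fun i => f i j)).
Proof.
  induction N; simpl.
  - symmetry; apply fsum_zero; auto.
  - rewrite IHN, <- fsum_plus. reflexivity.
Qed.

Lemma fsum_le N f g : (forall i, (i < N)%nat -> f i <= g i) -> fsum N f <= fsum N g.
Proof.
  induction N as [|N IH]; intros H; simpl; [lra|].
  assert (fsum N f <= fsum N g) by (apply IH; intros; apply H; lia).
  assert (f N <= g N) by (apply H; lia). lra.
Qed.

Lemma fsum_nonneg N f : (forall i, (i < N)%nat -> 0 <= f i) -> 0 <= fsum N f.
Proof.
  intros H. rewrite <- (fsum_zero N (fun _ => 0)) by auto. apply fsum_le; auto.
Qed.

Lemma fsum_abs N f : Rabs (fsum N f) <= fsum N (fun i => Rabs (f i)).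
Proof.
  induction N; simpl; [rewrite Rabs_R0; lra|].
  eapply Rle_trans; [apply Rabs_triang | lra].
Qed.

Lemma fsum_term_le N f i : (forall j, (j < N)%nat -> 0 <= f j) -> (i < N)%nat ->
  f i <= fsum N f.
Proof.
  induction N as [|N IH]; intros H Hi; [lia|]. simpl.
  destruct (Nat.eq_dec i N) as [->|Hne].
  - assert (0 <= fsum N f) by (apply fsum_nonneg; intros; apply H; lia). lra.
  - assert (f i <= fsum N f) by (apply IH; [intros; apply H; lia | lia]).
    assert (0 <= f N) by (apply H; lia). lra.
Qed.

Lemma fsum_kronecker N i f : (i < N)%nat ->
  fsum N (fun j => (if Nat.eqb i j then 1 else 0) * f j) = f i.
Proof.
  induction N as [|N IH]; intros Hi; [lia|]. simpl.
  destruct (Nat.eq_dec i N) as [->|Hne].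
  - rewrite Nat.eqb_refl, fsum_zero; [ring|].
    intros j Hj. destruct (Nat.eqb_spec N j); [lia | ring].
  - rewrite IH by lia. destruct (Nat.eqb_spec i N); [lia | ring].
Qed.

Lemma fsum_kronecker_r N i f : (i < N)%nat ->
  fsum N (fun j => f j * (if Nat.eqb j i then 1 else 0)) = f i.
Proof.
  intros Hi. rewrite <- (fsum_kronecker N i f Hi). apply fsum_ext; intros j _.
  destruct (Nat.eqb_spec j i), (Nat.eqb_spec i j); try lia; ring.
Qed.

Lemma fsum_derivable N (f : nat -> R -> R) d t :
  (forall i, (i < N)%nat -> derivable_pt_lim (f i) t (d i)) ->
  derivable_pt_lim (fun s => fsum N (fun i => f i s)) t (fsum N d).
Proof.
  induction N as [|N IH]; intros H; simpl.
  - apply derivable_pt_lim_const.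
  - apply (derivable_pt_lim_plus (fun s => fsum N (fun i => f i s)) (f N));
      [apply IH; intros|]; apply H; lia.
Qed.

Definition sqnorm m (v : vec) := fsum m (fun i => v i ^ 2).
Definition bilin m (A : mat) (a b : vec) := fsum m (fun i => fsum m (fun j => a i * A i j * b j)).
Definition dotp m (a b : vec) := fsum m (fun i => a i * b i).

Lemma sqnorm_nonneg m v : 0 <= sqnorm m v.
Proof. apply fsum_nonneg; intros; apply pow2_ge_0. Qed.

Lemma sqr_le_sqnorm m v i : (i < m)%nat -> v i ^ 2 <= sqnorm m v.
Proof. intros Hi. apply (fsum_term_le m (fun i => v i ^ 2)); auto. intros; apply pow2_ge_0. Qed.

Lemma sqnorm_eq0 m v : sqnorm m v = 0 -> forall i, (i < m)%nat -> v i = 0.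
Proof. intros H i Hi. pose proof (sqr_le_sqnorm m v i Hi). nra. Qed.

Lemma Rabs_le_vnorm m v i : (i < m)%nat -> Rabs (v i) <= vnorm m v.
Proof.
  intros Hi. unfold vnorm. rewrite <- sqrt_Rsqr_abs. apply sqrt_le_1_alt.
  rewrite Rsqr_pow2. apply (sqr_le_sqnorm m v i Hi).
Qed.

Lemma quad_zero m A v : (forall i, (i < m)%nat -> v i = 0) -> quad m A v = 0.
Proof.
  intros Z. apply fsum_zero; intros i Hi. rewrite (Z i Hi). apply fsum_zero; intros; ring.
Qed.

Lemma bilin_sym m A u v : symmetric m A -> bilin m A u v = bilin m A v u.
Proof.
  intros HS. unfold bilin. rewrite fsum_swap.
  apply fsum_ext; intros i Hi; apply fsum_ext; intros j Hj. rewrite (HS i j) by auto. ring.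
Qed.

Lemma quad_shift m A u w s : symmetric m A ->
  quad m A (fun i => u i + s * w i) = quad m A u + 2 * s * bilin m A u w + s ^ 2 * quad m A w.
Proof.
  intros HS.
  transitivity (quad m A u + s * bilin m A u w + s * bilin m A w u + s ^ 2 * quad m A w).
  - unfold quad, bilin. rewrite <- !fsum_scal, <- !fsum_plus. apply fsum_ext; intros i _.
    rewrite <- !fsum_scal, <- !fsum_plus. apply fsum_ext; intros; ring.
  - rewrite (bilin_sym m A w u HS). ring.
Qed.

Lemma sqnorm_shift m u w s :
  sqnorm m (fun i => u i + s * w i) = sqnorm m u + 2 * s * dotp m u w + s ^ 2 * sqnorm m w.
Proof. unfold sqnorm, dotp. rewrite <- !fsum_scal, <- !fsum_plus. apply fsum_ext; intros; ring. Qed.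

Lemma quad_scale m A v c : quad m A (fun i => c * v i) = c ^ 2 * quad m A v.
Proof.
  unfold quad. rewrite <- fsum_scal. apply fsum_ext; intros i _.
  rewrite <- fsum_scal. apply fsum_ext; intros; ring.
Qed.

Lemma sqnorm_scale m v c : sqnorm m (fun i => c * v i) = c ^ 2 * sqnorm m v.
Proof. unfold sqnorm. rewrite <- fsum_scal. apply fsum_ext; intros; ring. Qed.

Lemma linear_dominated_by_quadratic a b : (forall s, 0 <= a * s + b * s ^ 2) -> a = 0.
Proof.
  intros H. destruct (Req_dec a 0) as [|Ha]; auto. exfalso.
  set (c := 1 + Rabs b).
  assert (Hc : 0 < c) by (unfold c; pose proof (Rabs_pos b); lra).
  assert (Hb : b < c) by (unfold c; pose proof (RRle_abs b); lra).
  specialize (H (- a / c)).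
  replace (a * (- a / c) + b * (- a / c) ^ 2) with ((a * a) * (b - c) / (c * c)) in H
    by (field; lra).
  assert (Ha2 : 0 < a * a) by exact (Rsqr_pos_lt a Ha).
  assert (Hcc : 0 < / (c * c)) by (apply Rinv_0_lt_compat; nra).
  assert (Hneg : a * a * (b - c) < 0) by nra.
  unfold Rdiv in H. pose proof (Rmult_lt_compat_r _ _ _ Hcc Hneg). lra.
Qed.

Lemma quadratic_discriminant a b c : 0 <= c ->
  (forall s, 0 <= a + 2 * b * s + c * s ^ 2) -> b ^ 2 <= a * c.
Proof.
  intros Hc H. destruct (Rle_lt_or_eq_dec 0 c Hc) as [Hc'|<-].
  - specialize (H (- b / c)).
    replace (a + 2 * b * (- b / c) + c * (- b / c) ^ 2) with ((a * c - b ^ 2) / c) in H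
      by (field; lra).
    assert (0 < / c) by (apply Rinv_0_lt_compat; lra).
    unfold Rdiv in H. nra.
  - destruct (Req_dec b 0) as [->|Hb]; [lra|].
    specialize (H (- (Rabs a + 1) / (2 * b))).
    replace (a + 2 * b * (- (Rabs a + 1) / (2 * b)) + 0 * (- (Rabs a + 1) / (2 * b)) ^ 2)
      with (a - (Rabs a + 1)) in H by (field; auto).
    pose proof (RRle_abs a). lra.
Qed.


Lemma quad_sphere_minimizer m A : (0 < m)%nat ->
  exists u, sqnorm m u = 1 /\ forall v, sqnorm m v = 1 -> quad m A u <= quad m A v.
Proof.
  intros Hm. apply SphereMinimum.quad_sphere_min.
  apply (Corelib.ssr.ssrbool.introT ssrnat.ltP). exact Hm.
Qed.

Lemma rayleigh_lower_bound m A u : sqnorm m u = 1 ->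
  (forall v, sqnorm m v = 1 -> quad m A u <= quad m A v) ->
  forall w, quad m A u * sqnorm m w <= quad m A w.
Proof.
  intros Hu Hmin w. pose proof (sqnorm_nonneg m w).
  destruct (Req_dec (sqnorm m w) 0) as [H0|H0].
  - rewrite H0, (quad_zero m A w (sqnorm_eq0 m w H0)). lra.
  - set (c := / sqrt (sqnorm m w)).
    assert (Hs : 0 < sqrt (sqnorm m w)) by (apply sqrt_lt_R0; lra).
    assert (Hc2 : c ^ 2 * sqnorm m w = 1).
    { unfold c. rewrite pow_inv. simpl. rewrite Rmult_1_r, sqrt_sqrt by lra. field. lra. }
    pose proof (Hmin _ (eq_trans (sqnorm_scale m w c) Hc2)) as Hm.
    rewrite quad_scale in Hm.
    apply (Rmult_le_compat_l (sqnorm m w)) in Hm; [|lra].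
    replace (sqnorm m w * (c ^ 2 * quad m A w)) with ((c ^ 2 * sqnorm m w) * quad m A w)
      in Hm by ring.
    rewrite Hc2 in Hm. lra.
Qed.

(* The first-order condition at a minimum of the Rayleigh quotient says that the
   minimizer is an eigenvector. *)
Lemma rayleigh_minimizer_eigenvalue m A u : symmetric m A -> sqnorm m u = 1 ->
  (forall w, quad m A u * sqnorm m w <= quad m A w) -> is_eigenvalue m A (quad m A u).
Proof.
  intros HS Hu Hray. set (mu := quad m A u). exists u. split.
  - apply NNPP. intros Hz. assert (sqnorm m u = 0); [|lra].
    apply fsum_zero. intros i Hi. destruct (Req_dec (u i) 0) as [->|E]; [ring|].
    exfalso; apply Hz; exists i; auto.
  - intros i Hi.
    set (w := fun j : nat => if Nat.eqb j i then 1 else 0).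
    assert (Hq : forall s, 0 <= (2 * (bilin m A u w - mu * dotp m u w)) * s
                                + (quad m A w - mu * sqnorm m w) * s ^ 2).
    { intros s. pose proof (Hray (fun j => u j + s * w j)) as Hr.
      rewrite quad_shift, sqnorm_shift, Hu in Hr by auto. fold mu in Hr. nra. }
    apply linear_dominated_by_quadratic in Hq.
    assert (Eb : bilin m A u w = fsum m (fun j => A i j * u j)).
    { rewrite bilin_sym by auto. unfold bilin.
      rewrite <- (fsum_kronecker_r m i (fun r => fsum m (fun j => A r j * u j))) by auto.
      apply fsum_ext; intros r _. rewrite <- fsum_scalr. apply fsum_ext; intros j _.
      unfold w. ring. }
    assert (Ed : dotp m u w = u i).
    { unfold dotp. rewrite <- (fsum_kronecker_r m i u) by auto. reflexivity. }
    rewrite Eb, Ed in Hq. lra.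
Qed.

Lemma quad_ge_lambda_min m (A : mat) lam0 : symmetric m A -> lambda_min_ge m A lam0 ->
  forall v, lam0 * sqnorm m v <= quad m A v.
Proof.
  intros HS HL v. destruct m as [|m].
  - unfold sqnorm, quad; simpl; lra.
  - destruct (quad_sphere_minimizer (S m) A) as [u [Hu Hmin]]; [lia|].
    pose proof (rayleigh_lower_bound _ _ _ Hu Hmin) as Hray.
    pose proof (HL _ (rayleigh_minimizer_eigenvalue _ _ _ HS Hu Hray)).
    pose proof (Hray v). pose proof (sqnorm_nonneg (S m) v). nra.
Qed.

Lemma posdef_quad_nonneg m A v : pos_def m A -> 0 <= quad m A v.
Proof.
  intros HP. destruct (classic (nonzero_vec m v)) as [H|H]; [left; apply HP; auto|].
  rewrite quad_zero; [lra|]. intros i Hi.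
  destruct (Req_dec (v i) 0); auto. exfalso; apply H; exists i; auto.
Qed.

Lemma bilin_cauchy_schwarz m A u v : symmetric m A -> pos_def m A ->
  bilin m A u v ^ 2 <= quad m A u * quad m A v.
Proof.
  intros HS HP. apply quadratic_discriminant; [apply posdef_quad_nonneg; auto|].
  intros s. pose proof (posdef_quad_nonneg m A (fun i => u i + s * v i) HP) as H.
  rewrite quad_shift in H by auto. nra.
Qed.

Definition abssum m (A : mat) := fsum m (fun r => fsum m (fun q => Rabs (A r q))).

Lemma abssum_nonneg m A : 0 <= abssum m A.
Proof. apply fsum_nonneg; intros; apply fsum_nonneg; intros; apply Rabs_pos. Qed.

Lemma quad_le_abssum m A v : quad m A v <= abssum m A * sqnorm m v.
Proof.
  unfold quad, abssum. rewrite <- fsum_scalr. apply fsum_le; intros r Hr.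
  rewrite <- fsum_scalr. apply fsum_le; intros q Hq.
  pose proof (sqr_le_sqnorm m v r Hr). pose proof (sqr_le_sqnorm m v q Hq).
  pose proof (Rabs_pos (A r q)).
  assert (v r * A r q * v q <= Rabs (A r q) * (Rabs (v r) * Rabs (v q))).
  { rewrite <- !Rabs_mult. replace (v r * A r q * v q) with (A r q * (v r * v q)) by ring.
    apply RRle_abs. }
  assert (Rabs (v r) * Rabs (v q) <= sqnorm m v).
  { pose proof (Rabs_pos (v r)); pose proof (Rabs_pos (v q)).
    rewrite <- (pow2_abs (v r)), <- (pow2_abs (v q)) in *. nra. }
  nra.
Qed.

(* (Gi^T)_ij = sum_k (Gi^T)_ik (G Gi)_kj = sum_l (G Gi)_li Gi_lj = Gi_ij *)
Lemma inverse_symmetric p (G Gi : mat) : symmetric p G -> is_inverse p G Gi -> symmetric p Gi.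
Proof.
  intros HS HI i j Hi Hj. symmetry.
  transitivity (fsum p (fun l => fsum p (fun k => G l k * Gi k i) * Gi l j)).
  - rewrite <- (fsum_kronecker_r p j (fun k => Gi k i)) by auto.
    rewrite (fsum_ext p _ (fun k => fsum p (fun l => Gi k i * G k l * Gi l j))).
    + rewrite fsum_swap. apply fsum_ext; intros l Hl. rewrite <- fsum_scalr.
      apply fsum_ext; intros k Hk. rewrite (HS k l) by auto. ring.
    + intros k Hk. destruct (HI k j Hk Hj) as [H1 _]. unfold mmul, idm in H1.
      rewrite <- H1, <- fsum_scal. apply fsum_ext; intros; ring.
  - rewrite <- (fsum_kronecker p i (fun l => Gi l j)) by auto.
    apply fsum_ext; intros l Hl. destruct (HI l i Hl Hi) as [H1 _].
    unfold mmul, idm in H1. rewrite H1.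
    destruct (Nat.eqb_spec l i), (Nat.eqb_spec i l); try lia; reflexivity.
Qed.

(* With u = Gi v one has |v|^2 = v^T G u and quad Gi v = u^T G u, so
   Cauchy-Schwarz for the form of G gives |v|^4 <= (v^T G v) (quad Gi v). *)
Lemma sqnorm_le_quad_inverse p (G Gi : mat) v : symmetric p G -> pos_def p G ->
  is_inverse p G Gi -> sqnorm p v <= (1 + abssum p G) * quad p Gi v.
Proof.
  intros HS HP HI.
  set (u := fun r => fsum p (fun q => Gi r q * v q)).
  assert (HGu : forall r, (r < p)%nat -> fsum p (fun q => G r q * u q) = v r).
  { intros r Hr. unfold u.
    rewrite (fsum_ext p _ (fun q => fsum p (fun s => G r q * Gi q s * v s))).
    - rewrite fsum_swap, <- (fsum_kronecker p r v) by auto.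
      apply fsum_ext; intros s Hs. destruct (HI r s Hr Hs) as [H1 _].
      unfold mmul, idm in H1. rewrite <- H1, <- fsum_scalr. apply fsum_ext; intros; ring.
    - intros q Hq. rewrite <- fsum_scal. apply fsum_ext; intros; ring. }
  assert (Hquad : quad p Gi v = quad p G u).
  { unfold quad. transitivity (fsum p (fun r => v r * u r)).
    - apply fsum_ext; intros r Hr. unfold u. rewrite <- fsum_scal.
      apply fsum_ext; intros; ring.
    - apply fsum_ext; intros r Hr. rewrite <- (HGu r Hr), <- fsum_scalr.
      apply fsum_ext; intros; ring. }
  assert (Hsq : sqnorm p v = bilin p G v u).
  { unfold sqnorm, bilin. apply fsum_ext; intros r Hr.
    rewrite (fsum_ext p _ (fun j => v r * (G r j * u j))) by (intros; ring).
    rewrite fsum_scal, HGu by auto. ring. }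
  pose proof (bilin_cauchy_schwarz p G v u HS HP) as CS. rewrite <- Hsq in CS.
  pose proof (quad_le_abssum p G v).
  pose proof (sqnorm_nonneg p v). pose proof (abssum_nonneg p G).
  pose proof (posdef_quad_nonneg p G u HP). pose proof (posdef_quad_nonneg p G v HP).
  rewrite Hquad.
  destruct (Req_dec (sqnorm p v) 0) as [Z|Z]; [rewrite Z; nra|].
  assert (sqnorm p v ^ 2 <= abssum p G * sqnorm p v * quad p G u) by nra.
  assert (sqnorm p v <= abssum p G * quad p G u) by nra.
  nra.
Qed.

Definition frobsq p n (W : mat) := fsum p (fun i => fsum n (fun j => W i j ^ 2)).

Lemma frobsq_nonneg p n W : 0 <= frobsq p n W.
Proof. apply fsum_nonneg; intros; apply fsum_nonneg; intros; apply pow2_ge_0. Qed.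

Lemma frob_sqr p n W : frob p n W ^ 2 = frobsq p n W.
Proof. unfold frob. rewrite <- Rsqr_pow2. apply Rsqr_sqrt, frobsq_nonneg. Qed.

Lemma frob_nonneg p n W : 0 <= frob p n W.
Proof. apply sqrt_pos. Qed.

Lemma frobsq_cols p n W : frobsq p n W = fsum n (fun j => sqnorm p (fun r => W r j)).
Proof. apply fsum_swap. Qed.

Lemma frob_le_entrywise p n (A : mat) c :
  (forall r j, (r < p)%nat -> (j < n)%nat -> Rabs (A r j) <= c) ->
  frob p n A <= sqrt (INR p * (INR n * c ^ 2)).
Proof.
  intros H. apply sqrt_le_1_alt.
  rewrite <- fsum_const. apply fsum_le; intros r Hr.
  rewrite <- fsum_const. apply fsum_le; intros j Hj.
  pose proof (H r j Hr Hj). pose proof (Rabs_pos (A r j)).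
  rewrite <- (pow2_abs (A r j)). apply pow_incr. lra.
Qed.

Lemma frob_cauchy_schwarz p n (A B : mat) :
  fsum p (fun i => fsum n (fun j => A i j * B i j)) <= frob p n A * frob p n B.
Proof.
  set (S := fsum p (fun i => fsum n (fun j => A i j * B i j))).
  assert (H : S ^ 2 <= frobsq p n A * frobsq p n B).
  { apply quadratic_discriminant; [apply frobsq_nonneg|]. intros s.
    replace (frobsq p n A + 2 * S * s + frobsq p n B * s ^ 2)
      with (frobsq p n (fun i j => A i j + s * B i j)); [apply frobsq_nonneg|].
    unfold frobsq, S.
    rewrite (fsum_ext p _ (fun i => fsum n (fun j => A i j ^ 2)
        + 2 * s * fsum n (fun j => A i j * B i j) + s ^ 2 * fsum n (fun j => B i j ^ 2))).
    - rewrite !fsum_plus, !fsum_scal. ring.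
    - intros i _. rewrite <- !fsum_scal, <- !fsum_plus. apply fsum_ext; intros; ring. }
  rewrite <- !frob_sqr in H.
  pose proof (frob_nonneg p n A). pose proof (frob_nonneg p n B).
  destruct (Rle_or_lt S (frob p n A * frob p n B)) as [|Hlt]; auto.
  assert (0 <= frob p n A * frob p n B) by (apply Rmult_le_pos; auto). nra.
Qed.

Lemma V1_cols p n Gi W : V1 p n Gi W = / 2 * fsum n (fun j => quad p Gi (fun r => W r j)).
Proof.
  unfold V1, trace, mmul, mtr, quad. f_equal. apply fsum_ext; intros j _.
  apply fsum_ext; intros r _. rewrite <- fsum_scal. apply fsum_ext; intros; ring.
Qed.

Lemma V1_le_frobsq p n Gi W : V1 p n Gi W <= / 2 * abssum p Gi * frobsq p n W.
Proof.
  rewrite V1_cols, frobsq_cols, Rmult_assoc.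
  apply Rmult_le_compat_l; [lra|]. rewrite <- fsum_scal.
  apply fsum_le; intros j _. apply quad_le_abssum.
Qed.

Lemma frobsq_le_V1 p n G Gi W : symmetric p G -> pos_def p G -> is_inverse p G Gi ->
  frobsq p n W <= 2 * (1 + abssum p G) * V1 p n Gi W.
Proof.
  intros HS HP HI. rewrite V1_cols, frobsq_cols.
  replace (2 * (1 + abssum p G) * (/ 2 * fsum n (fun j => quad p Gi (fun r => W r j))))
    with ((1 + abssum p G) * fsum n (fun j => quad p Gi (fun r => W r j))) by field.
  rewrite <- fsum_scal. apply fsum_le; intros j _. apply sqnorm_le_quad_inverse; auto.
Qed.

Lemma V1_nonneg p n G Gi W : symmetric p G -> pos_def p G -> is_inverse p G Gi ->
  0 <= V1 p n Gi W.
Proof.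
  intros HS HP HI. pose proof (frobsq_le_V1 p n G Gi W HS HP HI).
  pose proof (frobsq_nonneg p n W). pose proof (abssum_nonneg p G).
  destruct (Rle_or_lt 0 (V1 p n Gi W)); auto. nra.
Qed.

Lemma derivable_pt_lim_local (f g : R -> R) x d a b : a < x < b ->
  (forall y, a < y < b -> f y = g y) -> derivable_pt_lim f x d -> derivable_pt_lim g x d.
Proof.
  intros Hx Heq H eps Heps. destruct (H eps Heps) as [del Hdel].
  assert (Hm : 0 < Rmin del (Rmin (x - a) (b - x)))
    by (repeat apply Rmin_pos; try lra; apply (cond_pos del)).
  exists (mkposreal _ Hm). intros h Hh Hhm. simpl in Hhm.
  pose proof (Rmin_l del (Rmin (x - a) (b - x))). pose proof (Rmin_r del (Rmin (x - a) (b - x))).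
  pose proof (Rmin_l (x - a) (b - x)). pose proof (Rmin_r (x - a) (b - x)).
  rewrite <- (Heq x), <- (Heq (x + h)) by (unfold Rabs in Hhm; destruct Rcase_abs; lra).
  apply Hdel; auto. lra.
Qed.

Lemma MVT_nonincreasing (f : R -> R) a b : a < b ->
  (forall x, a <= x <= b -> continuity_pt f x) ->
  (forall x, a < x < b -> exists d, derivable_pt_lim f x d /\ d <= 0) ->
  f b <= f a.
Proof.
  intros Hab Hc Hd.
  set (df := fun x => epsilon (inhabits 0) (fun d => derivable_pt_lim f x d /\ d <= 0)).
  assert (Hdf : forall x, a < x < b -> derivable_pt_lim f x (df x) /\ df x <= 0)
    by (intros x Hx; apply epsilon_spec, Hd, Hx).
  set (pr1 := fun c (P : a < c < b) =>
         exist (fun l => derivable_pt_abs f c l) (df c) (proj1 (Hdf c P))).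
  set (pr2 := fun c (P : a < c < b) => derivable_pt_id c).
  destruct (MVT f id a b pr1 pr2 Hab Hc) as [c [P HM]].
  - intros; apply derivable_continuous_pt, derivable_pt_id.
  - unfold pr2 in HM. rewrite derive_pt_id in HM.
    change (derive_pt f c (pr1 c P)) with (df c) in HM.
    unfold id in HM. destruct (Hdf c P). nra.
Qed.

Lemma nonincreasing_off_finite (L : list R) (f : R -> R) a b : a <= b ->
  (forall x, a <= x <= b -> continuity_pt f x) ->
  (forall x, a < x < b -> ~ In x L -> exists d, derivable_pt_lim f x d /\ d <= 0) ->
  f b <= f a.
Proof.
  revert a b. induction L as [|c L IH]; intros a b Hab Hc Hd.
  - destruct (Req_dec a b) as [->|Hne]; [lra|].
    apply MVT_nonincreasing; [lra|auto|]. intros x Hx; apply Hd; auto.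
  - assert (Hsplit : forall a' b', a <= a' -> a' <= b' -> b' <= b ->
              (forall x, a' < x < b' -> x <> c) -> f b' <= f a').
    { intros a' b' H1 H2 H3 Hne. apply IH; [lra | intros; apply Hc; lra |].
      intros x Hx Hn. apply Hd; [lra|]. intros [E|E]; [apply (Hne x); auto | auto]. }
    destruct (Rlt_dec a c), (Rlt_dec c b).
    + assert (f c <= f a) by (apply Hsplit; intros; lra).
      assert (f b <= f c) by (apply Hsplit; intros; lra). lra.
    + apply Hsplit; intros; lra.
    + apply Hsplit; intros; lra.
    + apply Hsplit; intros; lra.
Qed.

Lemma Rmax0_lipschitz x y : Rabs (Rmax 0 y - Rmax 0 x) <= Rabs (y - x).
Proof. unfold Rmax, Rabs. repeat destruct Rle_dec; repeat destruct Rcase_abs; lra. Qed.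

Lemma cont_nonneg_extend f : cont_nonneg f -> forall x, continuity_pt (fun t => f (Rmax 0 t)) x.
Proof.
  intros Hf x eps Heps.
  destruct (Hf (Rmax 0 x) (Rmax_l 0 x) eps Heps) as [del [Hdel H]].
  exists del; split; auto. intros y [_ Hy]. simpl in *. unfold R_dist in *.
  apply H; [apply Rmax_l|]. eapply Rle_lt_trans; [apply Rmax0_lipschitz | auto].
Qed.

Lemma cont_nonneg_of_extend f :
  (forall x, continuity_pt (fun t => f (Rmax 0 t)) x) -> cont_nonneg f.
Proof.
  intros Hf t Ht eps Heps. destruct (Hf t eps Heps) as [del [Hdel H]].
  exists del; split; auto. intros s Hs Hst.
  destruct (Req_dec s t) as [->|Hne]; [rewrite Rminus_diag, Rabs_R0; lra|].
  specialize (H s). simpl in H. unfold R_dist in H.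
  rewrite !Rmax_right in H by lra. apply H. repeat split; auto.
Qed.

Lemma cont_nonneg_plus f g : cont_nonneg f -> cont_nonneg g ->
  cont_nonneg (fun t => f t + g t).
Proof.
  intros Hf Hg. apply cont_nonneg_of_extend. intros x.
  apply continuity_pt_plus; apply cont_nonneg_extend; auto.
Qed.

Lemma cont_nonneg_scal c f : cont_nonneg f -> cont_nonneg (fun t => c * f t).
Proof.
  intros Hf. apply cont_nonneg_of_extend. intros x.
  apply continuity_pt_scal; apply cont_nonneg_extend; auto.
Qed.

Lemma cont_nonneg_opp f : cont_nonneg f -> cont_nonneg (fun t => - f t).
Proof.
  intros Hf. apply cont_nonneg_of_extend. intros x.
  apply continuity_pt_opp; apply cont_nonneg_extend; auto.
Qed.

Lemma cont_nonneg_minus f g : cont_nonneg f -> cont_nonneg g ->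
  cont_nonneg (fun t => f t - g t).
Proof.
  intros Hf Hg. apply cont_nonneg_of_extend. intros x.
  apply continuity_pt_minus; apply cont_nonneg_extend; auto.
Qed.

Lemma cont_nonneg_fsum N (F : nat -> R -> R) : (forall i, (i < N)%nat -> cont_nonneg (F i)) ->
  cont_nonneg (fun t => fsum N (fun i => F i t)).
Proof.
  induction N as [|N IH]; intros H; simpl.
  - apply cont_nonneg_of_extend. intros x. apply continuity_pt_const. intros ? ?; reflexivity.
  - apply (cont_nonneg_plus (fun t => fsum N (fun i => F i t)) (F N));
      [apply IH; intros|]; apply H; lia.
Qed.

(* [g] solves [k g' + g = u] on (0, +oo) except at finitely many points of each
   bounded interval (the discontinuities of a piecewise continuous input). *)
Definition solves_filter (k : R) (u g : R -> R) : Prop :=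
  forall T, 0 < T -> exists L : list R, forall t, 0 < t < T -> ~ In t L ->
    exists d, derivable_pt_lim g t d /\ k * d + g t = u t.

Lemma solves_filter_opp k u g : solves_filter k u g ->
  solves_filter k (fun t => - u t) (fun t => - g t).
Proof.
  intros Hg T HT. destruct (Hg T HT) as [L HL]. exists L. intros t Ht Hn.
  destruct (HL t Ht Hn) as [d [Hd E]]. exists (- d).
  split; [apply derivable_pt_lim_opp; auto | lra].
Qed.

(* (g - c) e^{t/k} is nonincreasing as long as u <= c. *)
Lemma filter_output_le k u g c : 0 < k -> cont_nonneg g -> g 0 <= c ->
  (forall t, 0 <= t -> u t <= c) -> solves_filter k u g -> forall t, 0 <= t -> g t <= c.
Proof.
  intros Hk Hc H0 Hu Hg t Ht.
  destruct (Req_dec t 0) as [->|Htn]; auto.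
  destruct (Hg (t + 1) ltac:(lra)) as [L HL].
  set (h := fun s => (g (Rmax 0 s) - c) * exp (s * / k)).
  assert (Hm : h t <= h 0).
  { apply (nonincreasing_off_finite L h 0 t); [lra| |].
    - intros x _. unfold h. apply continuity_pt_mult.
      + apply continuity_pt_minus; [apply cont_nonneg_extend; auto|].
        apply continuity_pt_const; intros ? ?; reflexivity.
      + apply (continuity_pt_comp (fun s => s * / k) exp).
        * apply continuity_pt_mult; [apply derivable_continuous_pt, derivable_pt_id|].
          apply continuity_pt_const; intros ? ?; reflexivity.
        * apply derivable_continuous_pt, derivable_pt_exp.
    - intros s Hs Hn. destruct (HL s ltac:(lra) Hn) as [d [Hd Hkd]].
      exists ((d - 0) * exp (s * / k) + (g s - c) * (exp (s * / k) * / k)). split.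
      + apply (derivable_pt_lim_local (fun s => (g s - c) * exp (s * / k)) h s _ 0 (t + 1));
          [lra | intros y Hy; unfold h; rewrite Rmax_right by lra; reflexivity |].
        apply (derivable_pt_lim_mult (fun s => g s - c) (fun s => exp (s * / k))).
        * apply (derivable_pt_lim_minus g (fun _ => c)); auto. apply derivable_pt_lim_const.
        * apply (derivable_pt_lim_comp (fun s => s * / k) exp); [|apply derivable_pt_lim_exp].
          rewrite <- (Rmult_1_l (/ k)) at 1.
          apply (derivable_pt_lim_scal_right id), derivable_pt_lim_id.
      + replace ((d - 0) * exp (s * / k) + (g s - c) * (exp (s * / k) * / k))
          with (exp (s * / k) * / k * (u s - c)) by (rewrite <- Hkd; field; lra).
        assert (0 < exp (s * / k) * / k)
          by (apply Rmult_lt_0_compat; [apply exp_pos | apply Rinv_0_lt_compat; lra]).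
        pose proof (Hu s ltac:(lra)). nra. }
  unfold h in Hm. rewrite Rmult_0_l, exp_0, Rmult_1_r, !Rmax_right in Hm by lra.
  pose proof (exp_pos (t * / k)). nra.
Qed.

Lemma filter_output_bound k u g B : 0 < k -> cont_nonneg g -> Rabs (g 0) <= B ->
  (forall t, 0 <= t -> Rabs (u t) <= B) -> solves_filter k u g ->
  forall t, 0 <= t -> Rabs (g t) <= B.
Proof.
  intros Hk Hc H0 Hu Hg t Ht.
  assert (Habs : forall y, Rabs y <= B -> - B <= y <= B)
    by (intros y; unfold Rabs; destruct Rcase_abs; lra).
  apply Rabs_le. split.
  - enough (- g t <= B) by lra.
    apply (filter_output_le k (fun s => - u s) (fun s => - g s)); auto.
    + apply cont_nonneg_opp; auto.
    + apply Habs in H0. lra.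
    + intros s Hs. pose proof (Habs _ (Hu s Hs)). lra.
    + apply solves_filter_opp; auto.
  - apply (filter_output_le k u g); auto.
    + apply Habs in H0. lra.
    + intros s Hs. pose proof (Habs _ (Hu s Hs)). lra.
Qed.

Lemma partition_cover m (s : nat -> R) : (forall i, (i < m)%nat -> s i < s (S i)) ->
  forall x, s 0%nat <= x <= s m ->
  (exists i, (i <= m)%nat /\ x = s i) \/ (exists i, (i < m)%nat /\ s i < x < s (S i)).
Proof.
  induction m as [|m IH]; intros Hs x Hx.
  - left; exists 0%nat; split; [lia | lra].
  - destruct (Rle_dec x (s m)) as [Hle|Hgt].
    + destruct (IH (fun i Hi => Hs i ltac:(lia)) x) as [[i [Hi E]]|[i [Hi E]]];
        [lra | left | right]; exists i; split; auto; lia.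
    + destruct (Req_dec x (s (S m))) as [E|E].
      * left; exists (S m); split; [lia | auto].
      * right; exists m; split; [lia | lra].
Qed.

Lemma piecewise_continuous_exceptions f T : 0 < T -> piecewise_continuous f ->
  exists L, forall t, 0 < t < T -> ~ In t L -> continuity_pt f t.
Proof.
  intros HT Hpc. destruct (Hpc T HT) as [m [s [H0 [HmT Hp]]]].
  exists (map s (seq 0 (S m))). intros t Ht Hn.
  destruct (partition_cover m s (fun i Hi => proj1 (Hp i Hi)) t) as [[i [Hi E]]|[i [Hi E]]].
  - lra.
  - exfalso; apply Hn. rewrite E. apply in_map, in_seq. lia.
  - apply (Hp i Hi); auto.
Qed.

Lemma pc_vec_exceptions m f T : 0 < T -> pc_vec m f ->
  exists L, forall t, 0 < t < T -> ~ In t L -> cont_at_vec m f t.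
Proof.
  intros HT. induction m as [|m IH]; intros Hpc.
  - exists nil. intros t _ _ i Hi; lia.
  - destruct IH as [L1 HL1]; [intros i Hi; apply Hpc; lia|].
    destruct (piecewise_continuous_exceptions (fun t => f t m) T HT) as [L2 HL2];
      [apply Hpc; lia|].
    exists (L1 ++ L2). intros t Ht Hn i Hi.
    destruct (Nat.eq_dec i m) as [->|Hne].
    + apply HL2; auto. intro; apply Hn, in_or_app; auto.
    + apply HL1; [auto | | lia]. intro; apply Hn, in_or_app; auto.
Qed.

Lemma is_integral_lincomb f g a b u v c : is_integral f a b u -> is_integral g a b v ->
  is_integral (fun x => f x + c * g x) a b (u + c * v).
Proof.
  intros [p1 H1] [p2 H2]. exists (RiemannInt_P10 c p1 p2).
  rewrite RiemannInt_P13 with (pr1 := p1) (pr2 := p2). subst; reflexivity.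
Qed.

Lemma is_integral_zero a b : is_integral (fun _ => 0) a b 0.
Proof.
  exists (RiemannInt_P14 a b 0). transitivity (0 * (b - a)); [apply RiemannInt_P15 | ring].
Qed.

Lemma is_integral_fsum N (f : nat -> R -> R) (c v : nat -> R) a b :
  (forall i, (i < N)%nat -> is_integral (f i) a b (v i)) ->
  is_integral (fun s => fsum N (fun i => c i * f i s)) a b (fsum N (fun i => c i * v i)).
Proof.
  induction N as [|N IH]; intros H; simpl.
  - apply is_integral_zero.
  - apply is_integral_lincomb; [apply IH; intros|]; apply H; lia.
Qed.

Lemma is_integral_eq_interior f g a b u v : a <= b -> is_integral f a b u -> is_integral g a b v ->
  (forall x, a < x < b -> f x = g x) -> u = v.
Proof. intros Hab [p1 <-] [p2 <-] Heq. apply RiemannInt_P18; auto. Qed.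

Lemma is_integral_abs_le f g a b u v : a <= b -> is_integral f a b u -> is_integral g a b v ->
  (forall x, a < x < b -> Rabs (f x) <= g x) -> Rabs u <= v.
Proof.
  intros Hab [p1 <-] [p2 <-] Hle.
  eapply Rle_trans; [apply (RiemannInt_P17 p1 (RiemannInt_P16 p1) Hab)|].
  apply RiemannInt_P19; auto.
Qed.

Module ExpKernel.
From Coquelicot Require Import Coquelicot.

Lemma is_integral_exp_kernel l t : 0 < l -> 0 <= t ->
  is_integral (fun s => exp (- l * (t - s))) 0 t ((1 - exp (- l * t)) / l).
Proof.
  intros Hl Ht.
  assert (H : is_RInt (fun s => exp (- l * (t - s))) 0 t
              (minus (exp (- l * (t - t)) / l) (exp (- l * (t - 0)) / l))).
  { apply (@is_RInt_derive R_CompleteNormedModule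
             (fun s => exp (- l * (t - s)) / l) (fun s => exp (- l * (t - s)))).
    - intros x _. auto_derive; auto. replace (t + - x) with (t - x) by ring. field. lra.
    - intros x _. apply continuity_pt_filterlim.
      apply (continuity_pt_comp (fun s => - l * (t - s)) exp).
      + apply continuity_pt_mult; [apply continuity_pt_const; intros ? ?; reflexivity|].
        apply continuity_pt_minus; [apply continuity_pt_const; intros ? ?; reflexivity|].
        apply derivable_continuous_pt, derivable_pt_id.
      + apply derivable_continuous_pt, derivable_pt_exp. }
  exists (ex_RInt_Reals_0 _ _ _ (ex_intro _ _ H)). rewrite <- RInt_Reals.
  rewrite (is_RInt_unique _ _ _ _ H). unfold minus, plus, opp; simpl.
  replace (- l * (t - t)) with 0 by ring. rewrite exp_0.
  replace (- l * (t - 0)) with (- l * t) by ring. field. lra.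
Qed.

End ExpKernel.

Lemma exp_kernel_integral_bound l t c f u : 0 < l -> 0 <= t -> 0 <= c ->
  is_integral f 0 t u -> (forall s, 0 < s < t -> Rabs (f s) <= c * exp (- l * (t - s))) ->
  Rabs u <= c / l.
Proof.
  intros Hl Ht Hc Hf Hb.
  assert (Hi : is_integral (fun s => 0 + c * exp (- l * (t - s))) 0 t
                 (0 + c * ((1 - exp (- l * t)) / l)))
    by (apply is_integral_lincomb;
        [apply is_integral_zero | apply ExpKernel.is_integral_exp_kernel; auto]).
  eapply Rle_trans; [apply (is_integral_abs_le f _ 0 t u _ Ht Hf Hi)|].
  - intros s Hs. rewrite Rplus_0_l. auto.
  - assert (0 <= c * exp (- l * t) * / l)
      by (apply Rmult_le_pos; [apply Rmult_le_pos; [lra | left; apply exp_pos]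
                              | left; apply Rinv_0_lt_compat; lra]).
    unfold Rdiv. lra.
Qed.

Lemma derivable_continuous_from (V : R -> R) T1 :
  (forall t, T1 <= t -> exists d, derivable_pt_lim V t d) ->
  forall x, T1 <= x -> continuity_pt V x.
Proof.
  intros H x Hx. destruct (H x Hx) as [d Hd].
  apply derivable_continuous_pt. exists d. exact Hd.
Qed.

(* V (1 + a (s - T1)) is nonincreasing, so V decays like 1/t. *)
Lemma lyapunov_convergence (V f : R -> R) T1 a C : 0 < a -> 0 <= C ->
  (forall t, T1 <= t -> exists d, derivable_pt_lim V t d /\ d <= - a * V t) ->
  (forall t, 0 <= V t) -> (forall t, 0 <= f t) -> (forall t, f t ^ 2 <= C * V t) ->
  forall e, 0 < e -> exists T, forall t, T <= t -> f t < e.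
Proof.
  intros Ha HC Hd HV Hf Hfv e He.
  assert (Hc : forall x, T1 <= x -> continuity_pt V x)
    by (apply derivable_continuous_from; intros t Ht; destruct (Hd t Ht) as [d [H _]]; eauto).
  set (X := C * V T1).
  assert (HX : 0 <= X) by (apply Rmult_le_pos; auto).
  assert (He2 : 0 < e ^ 2) by (apply pow_lt; lra).
  exists (T1 + X / (a * e ^ 2)). intros t Ht.
  assert (Hxa : 0 <= X / (a * e ^ 2))
    by (apply Rmult_le_pos; [auto | left; apply Rinv_0_lt_compat, Rmult_lt_0_compat; lra]).
  set (h := fun s => V s * (1 + a * (s - T1))).
  assert (Hm : h t <= h T1).
  { apply (nonincreasing_off_finite nil h T1 t); [lra| |].
    - intros x Hx. apply continuity_pt_mult; [apply Hc; lra|].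
      apply derivable_continuous_pt. reg.
    - intros x Hx _. destruct (Hd x ltac:(lra)) as [d [Hd1 Hd2]].
      exists (d * (1 + a * (x - T1)) + V x * (0 + a * (1 - 0))). split.
      + apply (derivable_pt_lim_mult V (fun s => 1 + a * (s - T1))); auto.
        apply (derivable_pt_lim_plus (fun _ => 1) (fun s => a * (s - T1)));
          [apply derivable_pt_lim_const|].
        apply (derivable_pt_lim_scal (fun s => s - T1)).
        apply (derivable_pt_lim_minus id (fun _ => T1));
          [apply derivable_pt_lim_id | apply derivable_pt_lim_const].
      + pose proof (HV x). assert (0 <= a * (x - T1)) by (apply Rmult_le_pos; lra).
        assert (0 <= a * V x * (a * (x - T1))) by (repeat apply Rmult_le_pos; lra).
        nra. }
  unfold h in Hm. replace (T1 - T1) with 0 in Hm by ring.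
  rewrite Rmult_0_r, Rplus_0_r, Rmult_1_r in Hm.
  assert (HD : X / e ^ 2 <= a * (t - T1)).
  { replace (X / e ^ 2) with (a * (X / (a * e ^ 2))) by (field; split; lra).
    apply Rmult_le_compat_l; lra. }
  set (D := 1 + a * (t - T1)).
  assert (HDpos : 0 < D) by (unfold D; pose proof (Rmult_le_pos a (t - T1)); lra).
  assert (Hfd : f t ^ 2 * D <= X).
  { fold D in Hm. apply (Rle_trans _ (C * V t * D)).
    - apply Rmult_le_compat_r; [lra | apply Hfv].
    - unfold X. rewrite Rmult_assoc. apply Rmult_le_compat_l; auto. }
  assert (HXD : X < D * e ^ 2).
  { replace X with (X / e ^ 2 * e ^ 2) by (field; lra). unfold D. nra. }
  assert (f t ^ 2 < e ^ 2) by (apply (Rmult_lt_reg_r D); lra).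
  pose proof (Hf t). nra.
Qed.

Lemma lyapunov_reaches_level (V : R -> R) T1 R0 del : 0 < del ->
  (forall t, T1 <= t -> exists d, derivable_pt_lim V t d) ->
  (forall t, T1 <= t -> R0 <= V t -> exists d, derivable_pt_lim V t d /\ d <= - del) ->
  (forall t, 0 <= V t) -> exists T, T1 <= T /\ V T < R0.
Proof.
  intros Hdel Hder Hdec HV. apply NNPP. intros Hn.
  assert (Hall : forall s, T1 <= s -> R0 <= V s)
    by (intros s Hs; destruct (Rle_or_lt R0 (V s)); auto; exfalso; apply Hn; eauto).
  set (t := T1 + V T1 / del + 1).
  assert (HVd : 0 <= V T1 / del)
    by (apply Rmult_le_pos; [apply HV | left; apply Rinv_0_lt_compat; lra]).
  assert (Hm : V t + del * t <= V T1 + del * T1).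
  { apply (nonincreasing_off_finite nil (fun s => V s + del * s) T1 t); [unfold t; lra | |].
    - intros x Hx. apply continuity_pt_plus;
        [apply (derivable_continuous_from V T1 Hder); lra|].
      apply derivable_continuous_pt. reg.
    - intros x Hx _. destruct (Hdec x ltac:(lra) (Hall x ltac:(lra))) as [d [Hd1 Hd2]].
      exists (d + del * 1). split; [|lra].
      apply (derivable_pt_lim_plus V (fun s => del * s)); auto.
      apply (derivable_pt_lim_scal id), derivable_pt_lim_id. }
  assert (del * t = del * T1 + V T1 + del) by (unfold t; field; lra).
  pose proof (HV t). lra.
Qed.

(* Take s0 the supremum of the times in [T, t] where V <= R0: by continuity
   V s0 <= R0, and V decreases on (s0, t]. *)
Lemma lyapunov_stays_below (V : R -> R) T R0 :
  (forall t, T <= t -> R0 <= V t -> exists d, derivable_pt_lim V t d /\ d <= 0) ->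
  (forall t, T <= t -> exists d, derivable_pt_lim V t d) ->
  V T <= R0 -> forall t, T <= t -> V t <= R0.
Proof.
  intros Hdec Hder HVT t Ht. apply NNPP. intros Hn. apply Rnot_le_lt in Hn.
  pose proof (derivable_continuous_from V T Hder) as Hc.
  set (E := fun s => T <= s <= t /\ V s <= R0).
  destruct (completeness E) as [s0 [Hub Hlub]].
  { exists t; intros s [Hs _]; lra. }
  { exists T; split; lra. }
  assert (Hs0T : T <= s0) by (apply Hub; split; lra).
  assert (Hs0t : s0 <= t) by (apply Hlub; intros s [Hs _]; lra).
  assert (HV0 : V s0 <= R0).
  { apply NNPP. intros Hn2. apply Rnot_le_lt in Hn2.
    destruct (Hc s0 Hs0T (V s0 - R0) ltac:(lra)) as [dl [Hdl Hcl]].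
    assert (s0 <= s0 - dl / 2); [|lra].
    apply Hlub. intros s [Hs Hvs].
    destruct (Rle_or_lt s (s0 - dl / 2)) as [|Hlt]; auto. exfalso.
    assert (s <= s0) by (apply Hub; split; auto).
    destruct (Req_dec s s0) as [->|Hne]; [lra|].
    assert (Hd : Rabs (V s - V s0) < V s0 - R0).
    { apply (Hcl s). split; [split; [exact I | auto]|]. simpl; unfold R_dist.
      rewrite Rabs_left1 by lra. lra. }
    rewrite Rabs_left1 in Hd by lra. lra. }
  assert (V t <= V s0); [|lra].
  apply (nonincreasing_off_finite nil V s0 t); [lra | intros; apply Hc; lra|].
  intros x Hx _. apply Hdec; [lra|].
  destruct (Rlt_or_le R0 (V x)) as [|Hle]; [lra|].
  assert (x <= s0) by (apply Hub; split; [lra | auto]). lra.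
Qed.

(* Beyond theta = 2 nu / lam0 the quadratic term dominates: d <= - lam0 f^2 / 2. *)
Lemma lyapunov_ultimate_bound (V f : R -> R) T1 C c2 nu lam0 :
  0 < lam0 -> 0 <= C -> 0 < c2 -> 0 <= nu ->
  (forall t, T1 <= t -> exists d, derivable_pt_lim V t d /\ d <= - lam0 * f t ^ 2 + nu * f t) ->
  (forall t, 0 <= V t) -> (forall t, 0 <= f t) -> (forall t, f t ^ 2 <= C * V t) ->
  (forall t, V t <= c2 * f t ^ 2) ->
  exists T, forall t, T <= t -> f t <= sqrt (C * (c2 * (2 * nu / lam0) ^ 2 + 1)).
Proof.
  intros Hl HC Hc2 Hnu Hd HV Hf Hfv Hvf.
  set (th := 2 * nu / lam0).
  assert (Hth : 0 <= th)
    by (apply Rmult_le_pos; [lra | left; apply Rinv_0_lt_compat; lra]).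
  set (R0 := c2 * th ^ 2 + 1).
  assert (HR0 : 0 < R0) by (unfold R0; pose proof (pow2_ge_0 th); nra).
  set (del := lam0 * R0 / (2 * c2)).
  assert (Hdel : 0 < del)
    by (apply Rmult_lt_0_compat; [nra | apply Rinv_0_lt_compat; lra]).
  assert (Hder : forall t, T1 <= t -> exists d, derivable_pt_lim V t d)
    by (intros t Ht; destruct (Hd t Ht) as [d [H _]]; eauto).
  assert (Hdec : forall s, T1 <= s -> R0 <= V s ->
                   exists d, derivable_pt_lim V s d /\ d <= - del).
  { intros s Hs HVs. destruct (Hd s Hs) as [d [Hd1 Hd2]]. exists d; split; auto.
    pose proof (Hvf s). pose proof (Hf s).
    assert (Hfs : th < f s).
    { destruct (Rlt_or_le th (f s)) as [|Hle]; auto.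
      assert (f s ^ 2 <= th ^ 2) by (apply pow_incr; lra). unfold R0 in HVs. nra. }
    assert (2 * nu <= lam0 * f s).
    { replace (2 * nu) with (lam0 * th) by (unfold th; field; lra).
      apply Rmult_le_compat_l; lra. }
    assert (R0 <= c2 * f s ^ 2) by lra.
    assert (del <= lam0 * f s ^ 2 / 2).
    { unfold del. replace (lam0 * R0 / (2 * c2)) with (lam0 / (2 * c2) * R0) by (field; lra).
      replace (lam0 * f s ^ 2 / 2) with (lam0 / (2 * c2) * (c2 * f s ^ 2)) by (field; lra).
      apply Rmult_le_compat_l; [|lra].
      apply Rmult_le_pos; [lra | left; apply Rinv_0_lt_compat; lra]. }
    nra. }
  destruct (lyapunov_reaches_level V T1 R0 del Hdel Hder Hdec HV) as [T [HT HVT]].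
  exists T. intros t Ht.
  assert (HVt : V t <= R0).
  { apply (lyapunov_stays_below V T R0); [| | lra | auto].
    - intros s Hs HR. destruct (Hdec s ltac:(lra) HR) as [d [? ?]]. exists d; split; auto; lra.
    - intros s Hs. apply Hder; lra. }
  pose proof (Hfv t). pose proof (Hf t).
  rewrite <- (sqrt_pow2 (f t)) by auto. apply sqrt_le_1_alt.
  fold th. fold R0. nra.
Qed.

Lemma derivable_pt_lim_eq_val f t d d' : derivable_pt_lim f t d -> d = d' ->
  derivable_pt_lim f t d'.
Proof. intros H <-; exact H. Qed.

Lemma V1_derivable p n Gi (W : R -> mat) (D : mat) t : symmetric p Gi ->
  (forall i j, (i < p)%nat -> (j < n)%nat -> derivable_pt_lim (fun s => W s i j) t (D i j)) ->
  derivable_pt_lim (fun s => V1 p n Gi (W s)) t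
    (fsum n (fun j => fsum p (fun r => fsum p (fun q => W t r j * Gi r q * D q j)))).
Proof.
  intros HS HD. unfold V1, trace, mmul, mtr.
  eapply derivable_pt_lim_eq_val.
  - apply (derivable_pt_lim_scal (fun s => fsum n (fun j => fsum p (fun r =>
       W s r j * fsum p (fun q => Gi r q * W s q j))))).
    apply fsum_derivable; intros j Hj. apply fsum_derivable; intros r Hr.
    apply (derivable_pt_lim_mult (fun s => W s r j) (fun s => fsum p (fun q => Gi r q * W s q j)));
      [apply HD; auto|].
    apply fsum_derivable; intros q Hq. apply (derivable_pt_lim_scal (fun s => W s q j)), HD; auto.
  - rewrite <- fsum_scal. apply fsum_ext; intros j Hj. rewrite fsum_plus.
    assert (E1 : fsum p (fun r => D r j * fsum p (fun q => Gi r q * W t q j)) =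
                 fsum p (fun r => fsum p (fun q => W t r j * Gi r q * D q j))).
    { rewrite (fsum_ext p _ (fun r => fsum p (fun q => D r j * Gi r q * W t q j)))
        by (intros r _; rewrite <- fsum_scal; apply fsum_ext; intros; ring).
      rewrite fsum_swap. apply fsum_ext; intros r Hr; apply fsum_ext; intros q Hq.
      rewrite (HS q r) by auto. ring. }
    assert (E2 : fsum p (fun r => W t r j * fsum p (fun q => Gi r q * D q j)) =
                 fsum p (fun r => fsum p (fun q => W t r j * Gi r q * D q j)))
      by (apply fsum_ext; intros r _; rewrite <- fsum_scal; apply fsum_ext; intros; ring).
    rewrite E1, E2. field.
Qed.

Lemma update_bracket_regression p N (Pi K y1 : R -> mat) (W1 Wh : mat) ts t r j :
  K t r j = fsum p (fun u => W1 u j * Pi t r u) - y1 t r j ->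
  (forall q, (q < N)%nat ->
     K (ts q) r j = fsum p (fun u => W1 u j * Pi (ts q) r u) - y1 (ts q) r j) ->
  madd (msub (mmul p (Pi t) Wh) (K t))
       (msum N (fun q => msub (mmul p (Pi (ts q)) Wh) (K (ts q)))) r j
  = - fsum p (fun u => madd (Pi t) (msum N (fun q => Pi (ts q))) r u * (W1 u j - Wh u j))
    + madd (y1 t) (msum N (fun q => y1 (ts q))) r j.
Proof.
  intros HK HKq. unfold madd, msub, mmul, msum.
  rewrite HK, (fsum_ext N _ (fun q => fsum p (fun u => Pi (ts q) r u * Wh u j) -
      (fsum p (fun u => W1 u j * Pi (ts q) r u) - y1 (ts q) r j)))
    by (intros q Hq; rewrite HKq; auto).
  rewrite (fsum_ext p (fun u => (Pi t r u + fsum N (fun q => Pi (ts q) r u)) * (W1 u j - Wh u j))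
     (fun u => Pi t r u * (W1 u j - Wh u j) + fsum N (fun q => Pi (ts q) r u * (W1 u j - Wh u j))))
    by (intros; rewrite Rmult_plus_distr_r, <- fsum_scalr; reflexivity).
  rewrite fsum_plus, fsum_swap, !fsum_minus.
  rewrite (fsum_ext p (fun u => Pi t r u * (W1 u j - Wh u j))
     (fun u => W1 u j * Pi t r u - Pi t r u * Wh u j)) by (intros; ring).
  rewrite (fsum_ext N (fun q => fsum p (fun u => Pi (ts q) r u * (W1 u j - Wh u j)))
     (fun q => fsum p (fun u => W1 u j * Pi (ts q) r u) - fsum p (fun u => Pi (ts q) r u * Wh u j)))
    by (intros; rewrite <- fsum_minus; apply fsum_ext; intros; ring).
  rewrite !fsum_minus. ring.
Qed.

(* dV1/dt = tr(Wt^T Gi dWt/dt) with dWt/dt = Gamma (P Wt - Y); Gi Gamma = I. *)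
Lemma V1_derivative_estimator p n (Gamma Ginv : mat) (Pi K y1 : R -> mat) (W1 : mat)
    N ts What t :
  is_inverse p Gamma Ginv -> symmetric p Ginv ->
  (forall r j, (r < p)%nat -> (j < n)%nat ->
     K t r j = fsum p (fun u => W1 u j * Pi t r u) - y1 t r j) ->
  (forall q r j, (q < N)%nat -> (r < p)%nat -> (j < n)%nat ->
     K (ts q) r j = fsum p (fun u => W1 u j * Pi (ts q) r u) - y1 (ts q) r j) ->
  estimator_law p n Gamma Pi K N ts What -> 0 < t ->
  derivable_pt_lim (fun s => V1 p n Ginv (msub W1 (What s))) t
    (- fsum n (fun j => quad p (madd (Pi t) (msum N (fun q => Pi (ts q))))
                          (fun r => W1 r j - What t r j))
     + fsum p (fun r => fsum n (fun j =>
         (W1 r j - What t r j) * madd (y1 t) (msum N (fun q => y1 (ts q))) r j))).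
Proof.
  intros HI HS HK HKq Hlaw Ht.
  set (Mx := madd (msub (mmul p (Pi t) (What t)) (K t))
       (msum N (fun q => msub (mmul p (Pi (ts q)) (What t)) (K (ts q))))).
  eapply derivable_pt_lim_eq_val.
  - apply (V1_derivable p n Ginv (fun s => msub W1 (What s)) (mmul p Gamma Mx) t HS).
    intros i j Hi Hj. eapply derivable_pt_lim_eq_val.
    + apply (derivable_pt_lim_minus (fun _ => W1 i j) (fun s => What s i j));
        [apply derivable_pt_lim_const | apply Hlaw; auto].
    + unfold mopp. fold Mx. ring.
  - set (P := madd (Pi t) (msum N (fun q => Pi (ts q)))).
    set (Y := madd (y1 t) (msum N (fun q => y1 (ts q)))).
    set (W := msub W1 (What t)).
    assert (HM : forall r j, (r < p)%nat -> (j < n)%nat ->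
              Mx r j = - fsum p (fun u => P r u * W u j) + Y r j)
      by (intros; apply update_bracket_regression; auto).
    transitivity (fsum n (fun j => fsum p (fun r => W r j * Mx r j))).
    + apply fsum_ext; intros j Hj. apply fsum_ext; intros r Hr. unfold mmul.
      rewrite (fsum_ext p _ (fun q => fsum p (fun u => W r j * Ginv r q * Gamma q u * Mx u j)))
        by (intros q Hq; rewrite <- fsum_scal; apply fsum_ext; intros; ring).
      rewrite fsum_swap, <- (fsum_kronecker p r (fun u => W r j * Mx u j)) by auto.
      apply fsum_ext; intros u Hu. destruct (HI r u Hr Hu) as [_ H2]. unfold mmul, idm in H2.
      rewrite <- H2, <- fsum_scalr. apply fsum_ext; intros; ring.
    + rewrite (fsum_ext n _
        (fun j => - quad p P (fun r => W r j) + fsum p (fun r => W r j * Y r j))).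
      * rewrite fsum_plus, fsum_opp. f_equal. apply fsum_swap.
      * intros j Hj.
        rewrite (fsum_ext p _
          (fun r => - (W r j * fsum p (fun u => P r u * W u j)) + W r j * Y r j))
          by (intros r Hr; rewrite HM by auto; ring).
        rewrite fsum_plus, fsum_opp. unfold quad. f_equal. f_equal.
        apply fsum_ext; intros r _. rewrite <- fsum_scal. apply fsum_ext; intros; ring.
Qed.

(* Each entry of y1 is at most p1 B / l, and Y adds N + 1 such matrices. *)
Definition noise_gain p n N p1 l B := sqrt (INR p * (INR n * ((INR N + 1) * (p1 * B / l)) ^ 2)).

Section Estimator.

Variables (p n : nat) (W1 : mat) (Phi epsT x : R -> vec) (p1 p2 k l : R)
  (Phif xf xfd epsf : R -> vec) (Pi K y1 : R -> mat) (N : nat) (ts : nat -> R)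
  (Gamma Ginv : mat) (T1 lam0 : R).

Hypothesis Phi_pc : pc_vec p Phi.
Hypothesis epsT_pc : pc_vec n epsT.
Hypothesis Phi_bounded : forall t, 0 <= t -> vnorm p (Phi t) <= p1.
Hypothesis epsT_bounded : forall t, 0 <= t -> vnorm n (epsT t) <= p2.
Hypothesis x_cont : forall i, (i < n)%nat -> cont_nonneg (fun t => x t i).
Hypothesis x_dyn : forall t, 0 < t -> cont_at_vec p Phi t -> cont_at_vec n epsT t ->
  forall i, (i < n)%nat ->
    derivable_pt_lim (fun s => x s i) t (mvec p (mtr W1) (Phi t) i + epsT t i).
Hypothesis k_pos : 0 < k.
Hypothesis l_pos : 0 < l.
Hypothesis Phif_cont : forall i, (i < p)%nat -> cont_nonneg (fun t => Phif t i).
Hypothesis Phif_init : forall i, (i < p)%nat -> Phif 0 i = 0.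
Hypothesis Phif_ode : forall t, 0 < t -> cont_at_vec p Phi t -> forall i, (i < p)%nat ->
  exists d, derivable_pt_lim (fun s => Phif s i) t d /\ k * d + Phif t i = Phi t i.
Hypothesis xf_cont : forall i, (i < n)%nat -> cont_nonneg (fun t => xf t i).
Hypothesis xf_init : forall i, (i < n)%nat -> xf 0 i = x 0 i.
Hypothesis xf_ode : forall t, 0 < t -> forall i, (i < n)%nat ->
  derivable_pt_lim (fun s => xf s i) t (xfd t i) /\ k * xfd t i + xf t i = x t i.
Hypothesis epsf_cont : forall i, (i < n)%nat -> cont_nonneg (fun t => epsf t i).
Hypothesis epsf_init : forall i, (i < n)%nat -> epsf 0 i = 0.
Hypothesis epsf_ode : forall t, 0 < t -> cont_at_vec n epsT t -> forall i, (i < n)%nat ->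
  exists d, derivable_pt_lim (fun s => epsf s i) t d /\ k * d + epsf t i = epsT t i.
Hypothesis Pi_def : forall t, 0 <= t -> forall i j, (i < p)%nat -> (j < p)%nat ->
  is_integral (fun s => exp (- l * (t - s)) * (Phif s i * Phif s j)) 0 t (Pi t i j).
Hypothesis K_def : forall t, 0 <= t -> forall i j, (i < p)%nat -> (j < n)%nat ->
  is_integral (fun s => exp (- l * (t - s)) * (Phif s i * xfd s j)) 0 t (K t i j).
Hypothesis y1_def : forall t, 0 <= t -> forall i j, (i < p)%nat -> (j < n)%nat ->
  is_integral (fun s => exp (- l * (t - s)) * (Phif s i * epsf s j)) 0 t (- y1 t i j).
Hypothesis ts_nonneg : forall q, (q < N)%nat -> 0 <= ts q.
Hypothesis Gamma_sym : symmetric p Gamma.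
Hypothesis Gamma_pd : pos_def p Gamma.
Hypothesis Gamma_inv : is_inverse p Gamma Ginv.
Hypothesis T1_pos : 0 < T1.
Hypothesis lam0_pos : 0 < lam0.
Hypothesis P_lambda_min : forall t, T1 <= t ->
  lambda_min_ge p (madd (Pi t) (msum N (fun q => Pi (ts q)))) lam0.

Lemma input_exceptions T : 0 < T -> exists L, forall t, 0 < t < T -> ~ In t L ->
  cont_at_vec p Phi t /\ cont_at_vec n epsT t.
Proof.
  intros HT. destruct (pc_vec_exceptions p Phi T HT Phi_pc) as [L1 HL1].
  destruct (pc_vec_exceptions n epsT T HT epsT_pc) as [L2 HL2].
  exists (L1 ++ L2). intros t Ht Hn.
  split; [apply HL1 | apply HL2]; auto; intro; apply Hn, in_or_app; auto.
Qed.

Lemma Phif_bounded t : 0 <= t -> forall r, (r < p)%nat -> Rabs (Phif t r) <= p1.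
Proof.
  intros Ht r Hr.
  assert (Hu : forall s, 0 <= s -> Rabs (Phi s r) <= p1)
    by (intros s Hs; eapply Rle_trans; [apply Rabs_le_vnorm; eauto | auto]).
  apply (filter_output_bound k (fun s => Phi s r) (fun s => Phif s r)); auto.
  - rewrite Phif_init, Rabs_R0 by auto. pose proof (Hu 0 (Rle_refl 0)).
    pose proof (Rabs_pos (Phi 0 r)). lra.
  - intros T HT. destruct (input_exceptions T HT) as [L HL]. exists L. intros s Hs Hn.
    apply Phif_ode; [lra | apply HL; auto | auto].
Qed.

Lemma epsf_bounded B : (forall t, 0 <= t -> vnorm n (epsT t) <= B) ->
  forall t, 0 <= t -> forall j, (j < n)%nat -> Rabs (epsf t j) <= B.
Proof.
  intros HB t Ht j Hj.
  assert (Hu : forall s, 0 <= s -> Rabs (epsT s j) <= B)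
    by (intros s Hs; eapply Rle_trans; [apply Rabs_le_vnorm; eauto | auto]).
  apply (filter_output_bound k (fun s => epsT s j) (fun s => epsf s j)); auto.
  - rewrite epsf_init, Rabs_R0 by auto. pose proof (Hu 0 (Rle_refl 0)).
    pose proof (Rabs_pos (epsT 0 j)). lra.
  - intros T HT. destruct (input_exceptions T HT) as [L HL]. exists L. intros s Hs Hn.
    apply epsf_ode; [lra | apply HL; auto | auto].
Qed.

(* For t > 0, (x - xf) / k = xfd; the residual of the regression solves the
   homogeneous filter with zero initial value, hence vanishes. *)
Let residual j s :=
  (x s j - xf s j) / k - fsum p (fun r => W1 r j * Phif s r) - epsf s j.

Lemma residual_solves_filter j : (j < n)%nat -> solves_filter k (fun _ => 0) (residual j).
Proof.
  intros Hj T HT. destruct (input_exceptions T HT) as [L HL]. exists L. intros s Hs Hn.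
  destruct (HL s Hs Hn) as [HcP HcE].
  assert (Hdr : forall r, exists d, (r < p)%nat ->
            derivable_pt_lim (fun s => Phif s r) s d /\ k * d + Phif s r = Phi s r).
  { intros r. destruct (Nat.ltb_spec r p) as [Hr|Hr]; [|exists 0; lia].
    destruct (Phif_ode s ltac:(lra) HcP r Hr) as [d Hd]. exists d; auto. }
  apply choice in Hdr. destruct Hdr as [dr Hdr].
  destruct (xf_ode s ltac:(lra) j Hj) as [Hdxf Hkx].
  destruct (epsf_ode s ltac:(lra) HcE j Hj) as [e [Hde Hke]].
  exists ((mvec p (mtr W1) (Phi s) j + epsT s j - xfd s j) / k
          - fsum p (fun r => W1 r j * dr r) - e).
  split.
  - unfold residual, Rdiv. apply derivable_pt_lim_minus; [apply derivable_pt_lim_minus|]; auto.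
    + apply derivable_pt_lim_scal_right, derivable_pt_lim_minus; [apply x_dyn; auto; lra | auto].
    + apply (fsum_derivable p (fun r s => W1 r j * Phif s r)). intros r Hr.
      apply derivable_pt_lim_scal, Hdr; auto.
  - assert (Hsum : mvec p (mtr W1) (Phi s) j =
                   k * fsum p (fun r => W1 r j * dr r) + fsum p (fun r => W1 r j * Phif s r)).
    { unfold mvec, mtr. rewrite <- fsum_scal, <- fsum_plus. apply fsum_ext; intros r Hr.
      destruct (Hdr r Hr) as [_ E]. rewrite <- E. ring. }
    unfold residual. rewrite Hsum, <- Hke, <- Hkx. field. lra.
Qed.

Lemma filtered_regression t : 0 < t -> forall j, (j < n)%nat ->
  xfd t j = fsum p (fun r => W1 r j * Phif t r) + epsf t j.
Proof.
  intros Ht j Hj.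
  assert (Hz : Rabs (residual j t) <= 0).
  { apply (filter_output_bound k (fun _ => 0)); auto; try lra.
    - unfold residual, Rdiv.
      apply cont_nonneg_minus; [apply cont_nonneg_minus|]; auto.
      + apply (cont_nonneg_of_extend (fun s => (x s j - xf s j) * / k)). intros y.
        apply continuity_pt_mult; [|apply continuity_pt_const; intros ? ?; reflexivity].
        apply (cont_nonneg_extend (fun s => x s j - xf s j)), cont_nonneg_minus; auto.
      + apply (cont_nonneg_fsum p (fun r s => W1 r j * Phif s r)).
        intros r Hr. apply cont_nonneg_scal; auto.
    - unfold residual. rewrite xf_init, epsf_init by auto.
      rewrite fsum_zero by (intros r Hr; rewrite Phif_init by auto; ring).
      unfold Rdiv. rewrite Rminus_diag, Rmult_0_l, !Rminus_0_r, Rabs_R0. lra.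
    - intros; rewrite Rabs_R0; lra.
    - apply residual_solves_filter; auto. }
  assert (Hr0 : residual j t = 0)
    by (pose proof (Rle_abs (residual j t)); pose proof (Rle_abs (- residual j t));
        rewrite Rabs_Ropp in *; lra).
  unfold residual in Hr0. destruct (xf_ode t Ht j Hj) as [_ Hkx].
  rewrite <- Hkx in Hr0. replace ((k * xfd t j + xf t j - xf t j) / k) with (xfd t j) in Hr0
    by (field; lra). lra.
Qed.

Lemma K_regression t : 0 <= t -> forall r j, (r < p)%nat -> (j < n)%nat ->
  K t r j = fsum p (fun u => W1 u j * Pi t r u) - y1 t r j.
Proof.
  intros Ht r j Hr Hj.
  assert (Hg : is_integral (fun s =>
      fsum p (fun u => W1 u j * (exp (- l * (t - s)) * (Phif s r * Phif s u)))
      + 1 * (exp (- l * (t - s)) * (Phif s r * epsf s j))) 0 t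
      (fsum p (fun u => W1 u j * Pi t r u) + 1 * (- y1 t r j))).
  { apply is_integral_lincomb; [|apply y1_def; auto].
    apply (is_integral_fsum p (fun u s => exp (- l * (t - s)) * (Phif s r * Phif s u))).
    intros u Hu. apply Pi_def; auto. }
  rewrite (is_integral_eq_interior _ _ 0 t _ _ Ht (K_def t Ht r j Hr Hj) Hg); [ring|].
  intros s Hs. rewrite filtered_regression by (lra || auto).
  rewrite Rmult_plus_distr_l, Rmult_plus_distr_l, Rmult_1_l. f_equal.
  rewrite <- !fsum_scal. apply fsum_ext; intros; ring.
Qed.

Lemma Pi_symmetric t : 0 <= t -> symmetric p (Pi t).
Proof.
  intros Ht i j Hi Hj.
  apply (is_integral_eq_interior _ _ 0 t _ _ Ht (Pi_def t Ht i j Hi Hj) (Pi_def t Ht j i Hj Hi)).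
  intros; ring.
Qed.

Lemma y1_bounded B : (forall t, 0 <= t -> forall j, (j < n)%nat -> Rabs (epsf t j) <= B) ->
  forall t, 0 <= t -> forall r j, (r < p)%nat -> (j < n)%nat -> Rabs (y1 t r j) <= p1 * B / l.
Proof.
  intros He t Ht r j Hr Hj. rewrite <- Rabs_Ropp.
  pose proof (Phif_bounded 0 (Rle_refl 0) r Hr). pose proof (He 0 (Rle_refl 0) j Hj).
  pose proof (Rabs_pos (Phif 0 r)). pose proof (Rabs_pos (epsf 0 j)).
  apply (exp_kernel_integral_bound l t (p1 * B)
           (fun s => exp (- l * (t - s)) * (Phif s r * epsf s j))); auto; [nra|].
  intros s Hs. rewrite !Rabs_mult, (Rabs_pos_eq (exp _)) by (left; apply exp_pos).
  pose proof (Phif_bounded s ltac:(lra) r Hr). pose proof (He s ltac:(lra) j Hj).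
  pose proof (Rabs_pos (Phif s r)). pose proof (Rabs_pos (epsf s j)).
  pose proof (exp_pos (- l * (t - s))).
  assert (Rabs (Phif s r) * Rabs (epsf s j) <= p1 * B) by nra. nra.
Qed.

Lemma stacked_y1_bounded B : 0 <= B ->
  (forall t, 0 <= t -> forall j, (j < n)%nat -> Rabs (epsf t j) <= B) ->
  forall t, 0 <= t ->
    frob p n (madd (y1 t) (msum N (fun q => y1 (ts q)))) <= noise_gain p n N p1 l B.
Proof.
  intros HB He t Ht. apply frob_le_entrywise. intros r j Hr Hj. unfold madd, msum.
  eapply Rle_trans; [apply Rabs_triang|].
  eapply Rle_trans; [apply Rplus_le_compat; [apply Rle_refl | apply fsum_abs]|].
  pose proof (y1_bounded B He t Ht r j Hr Hj).
  assert (fsum N (fun q => Rabs (y1 (ts q) r j)) <= INR N * (p1 * B / l))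
    by (rewrite <- fsum_const; apply fsum_le; intros q Hq; apply y1_bounded; auto).
  lra.
Qed.

Lemma V1_derivative_bound B : 0 <= B ->
  (forall t, 0 <= t -> forall j, (j < n)%nat -> Rabs (epsf t j) <= B) ->
  forall What, estimator_law p n Gamma Pi K N ts What -> forall t, T1 <= t ->
  exists d, derivable_pt_lim (fun s => V1 p n Ginv (msub W1 (What s))) t d /\
    d <= - lam0 * frob p n (msub W1 (What t)) ^ 2
         + noise_gain p n N p1 l B * frob p n (msub W1 (What t)).
Proof.
  intros HB He What Hlaw t Ht.
  eexists; split.
  - apply (V1_derivative_estimator p n Gamma Ginv Pi K y1 W1 N ts What t Gamma_inv).
    + apply (inverse_symmetric p Gamma Ginv); auto.
    + intros r j Hr Hj. apply K_regression; auto; lra.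
    + intros q r j Hq Hr Hj. apply K_regression; auto.
    + exact Hlaw.
    + lra.
  - set (W := msub W1 (What t)).
    assert (Hquad : lam0 * frobsq p n W <=
        fsum n (fun j => quad p (madd (Pi t) (msum N (fun q => Pi (ts q))))
                              (fun r => W1 r j - What t r j))).
    { rewrite frobsq_cols, <- fsum_scal. apply fsum_le; intros j Hj.
      apply quad_ge_lambda_min; [|auto].
      intros a b Ha Hb. unfold madd, msum. rewrite Pi_symmetric by (auto; lra).
      f_equal. apply fsum_ext; intros q Hq. apply Pi_symmetric; auto. }
    assert (Hnoise : fsum p (fun r => fsum n (fun j =>
        (W1 r j - What t r j) * madd (y1 t) (msum N (fun q => y1 (ts q))) r j))
        <= frob p n W * noise_gain p n N p1 l B).
    { eapply Rle_trans; [apply (frob_cauchy_schwarz p n W)|].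
      apply Rmult_le_compat_l; [apply frob_nonneg | apply stacked_y1_bounded; auto; lra]. }
    rewrite frob_sqr. lra.
Qed.

Let c2 := / 2 * abssum p Ginv + 1.
Let C := 2 * (1 + abssum p Gamma).

Lemma V1_le_frob W : V1 p n Ginv W <= c2 * frob p n W ^ 2.
Proof.
  rewrite frob_sqr. pose proof (V1_le_frobsq p n Ginv W). pose proof (frobsq_nonneg p n W).
  unfold c2. nra.
Qed.

Lemma frob_le_V1 W : frob p n W ^ 2 <= C * V1 p n Ginv W.
Proof. rewrite frob_sqr. apply frobsq_le_V1; auto. Qed.

Lemma estimation_error_converges :
  (forall t, 0 <= t -> forall i, (i < n)%nat -> epsT t i = 0) ->
  forall What : R -> mat, estimator_law p n Gamma Pi K N ts What ->
    (forall t, T1 <= t -> exists d,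
       derivable_pt_lim (fun s => V1 p n Ginv (msub W1 (What s))) t d /\
       d <= - lam0 * (frob p n (msub W1 (What t))) ^ 2) /\
    (forall e, 0 < e -> exists T, forall t, T <= t -> frob p n (msub W1 (What t)) < e).
Proof.
  intros Heps0 What Hlaw.
  assert (He0 : forall t, 0 <= t -> forall j, (j < n)%nat -> Rabs (epsf t j) <= 0).
  { apply epsf_bounded. intros t Ht. unfold vnorm.
    rewrite fsum_zero, sqrt_0; [lra|]. intros i Hi. rewrite Heps0 by auto. ring. }
  assert (Hgain : noise_gain p n N p1 l 0 = 0).
  { unfold noise_gain. unfold Rdiv. rewrite Rmult_0_r, Rmult_0_l, Rmult_0_r. simpl.
    rewrite !Rmult_0_l, !Rmult_0_r. apply sqrt_0. }
  assert (Hdec : forall t, T1 <= t -> exists d,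
      derivable_pt_lim (fun s => V1 p n Ginv (msub W1 (What s))) t d /\
      d <= - lam0 * frob p n (msub W1 (What t)) ^ 2).
  { intros t Ht. destruct (V1_derivative_bound 0 (Rle_refl 0) He0 What Hlaw t Ht) as [d [Hd1 Hd2]].
    exists d; split; auto. rewrite Hgain in Hd2. lra. }
  split; auto.
  assert (Hc2 : 0 < c2) by (unfold c2; pose proof (abssum_nonneg p Ginv); lra).
  apply (lyapunov_convergence (fun s => V1 p n Ginv (msub W1 (What s)))
           (fun s => frob p n (msub W1 (What s))) T1 (lam0 / c2) C).
  - apply Rmult_lt_0_compat; [lra | apply Rinv_0_lt_compat; lra].
  - unfold C. pose proof (abssum_nonneg p Gamma). lra.
  - intros t Ht. destruct (Hdec t Ht) as [d [Hd1 Hd2]]. exists d; split; auto.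
    set (W := msub W1 (What t)) in *.
    assert (lam0 / c2 * V1 p n Ginv W <= lam0 * frob p n W ^ 2).
    { replace (lam0 * frob p n W ^ 2) with (lam0 / c2 * (c2 * frob p n W ^ 2)) by (field; lra).
      apply Rmult_le_compat_l; [apply Rlt_le, Rdiv_lt_0_compat; lra | apply V1_le_frob]. }
    lra.
  - intros; apply (V1_nonneg p n Gamma); auto.
  - intros; apply frob_nonneg.
  - intros; apply frob_le_V1.
Qed.

Lemma estimation_error_uub :
  exists nu1, 0 <= nu1 /\
    (forall t, 0 <= t -> frob p n (madd (y1 t) (msum N (fun q => y1 (ts q)))) <= nu1) /\
    exists b, forall What : R -> mat, estimator_law p n Gamma Pi K N ts What ->
      (forall t, T1 <= t -> exists d,
         derivable_pt_lim (fun s => V1 p n Ginv (msub W1 (What s))) t d /\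
         d <= - lam0 * (frob p n (msub W1 (What t))) ^ 2
              + nu1 * frob p n (msub W1 (What t)) /\
         (nu1 / lam0 < frob p n (msub W1 (What t)) -> d < 0)) /\
      (exists T, forall t, T <= t -> frob p n (msub W1 (What t)) <= b).
Proof.
  assert (Hp2 : 0 <= p2) by exact (Rle_trans _ _ _ (sqrt_pos _) (epsT_bounded 0 (Rle_refl 0))).
  pose proof (epsf_bounded p2 epsT_bounded) as He.
  set (nu1 := noise_gain p n N p1 l p2).
  assert (Hnu1 : 0 <= nu1) by apply sqrt_pos.
  exists nu1. split; [auto | split; [apply stacked_y1_bounded; auto|]].
  exists (sqrt (C * (c2 * (2 * nu1 / lam0) ^ 2 + 1))). intros What Hlaw. split.
  - intros t Ht. destruct (V1_derivative_bound p2 Hp2 He What Hlaw t Ht) as [d [Hd1 Hd2]].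
    exists d. split; [auto | split; [auto|]].
    intros Hlt. set (f := frob p n (msub W1 (What t))) in *.
    assert (nu1 < lam0 * f).
    { replace nu1 with (lam0 * (nu1 / lam0)) by (field; lra).
      apply Rmult_lt_compat_l; auto. }
    assert (0 <= nu1 / lam0)
      by exact (Rmult_le_pos _ _ Hnu1 (Rlt_le _ _ (Rinv_0_lt_compat _ lam0_pos))).
    assert (0 < f) by lra.
    fold nu1 in Hd2. nra.
  - apply (lyapunov_ultimate_bound (fun s => V1 p n Ginv (msub W1 (What s)))
             (fun s => frob p n (msub W1 (What s))) T1); auto.
    + unfold C. pose proof (abssum_nonneg p Gamma). lra.
    + unfold c2. pose proof (abssum_nonneg p Ginv). lra.
    + intros t Ht. apply (V1_derivative_bound p2 Hp2 He What Hlaw t Ht).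
    + intros; apply (V1_nonneg p n Gamma); auto.
    + intros; apply frob_nonneg.
    + intros; apply frob_le_V1.
    + intros; apply V1_le_frob.
Qed.

End Estimator.
Theorem theorem1 (n kw1 kw2 : nat) :
  let p := (kw1 + kw2)%nat in
  forall (W1 : mat) (Phi epsT x : R -> vec) (p1 p2 : R),
  pc_vec p Phi -> pc_vec n epsT ->
  (forall t, 0 <= t -> vnorm p (Phi t) <= p1) ->
  (forall t, 0 <= t -> vnorm n (epsT t) <= p2) ->
  (* state equation  dx/dt = W1^T Phi + epsT *)
  (forall i, (i < n)%nat -> cont_nonneg (fun t => x t i)) ->
  (forall t, 0 < t -> cont_at_vec p Phi t -> cont_at_vec n epsT t ->
     forall i, (i < n)%nat ->
       derivable_pt_lim (fun s => x s i) t (mvec p (mtr W1) (Phi t) i + epsT t i)) ->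
  forall (k l : R), 0 < k -> 0 < l ->
  forall (Phif xf xfd epsf : R -> vec),
  (* k dPhif/dt + Phif = Phi, Phif(0) = 0 *)
  (forall i, (i < p)%nat -> cont_nonneg (fun t => Phif t i)) ->
  (forall i, (i < p)%nat -> Phif 0 i = 0) ->
  (forall t, 0 < t -> cont_at_vec p Phi t -> forall i, (i < p)%nat ->
     exists d, derivable_pt_lim (fun s => Phif s i) t d /\ k * d + Phif t i = Phi t i) ->
  (* k dxf/dt + xf = x, xf(0) = x(0); xfd is dxf/dt *)
  (forall i, (i < n)%nat -> cont_nonneg (fun t => xf t i)) ->
  (forall i, (i < n)%nat -> xf 0 i = x 0 i) ->
  (forall t, 0 < t -> forall i, (i < n)%nat ->
     derivable_pt_lim (fun s => xf s i) t (xfd t i) /\ k * xfd t i + xf t i = x t i) ->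
  (* k depsf/dt + epsf = epsT, epsf(0) = 0 *)
  (forall i, (i < n)%nat -> cont_nonneg (fun t => epsf t i)) ->
  (forall i, (i < n)%nat -> epsf 0 i = 0) ->
  (forall t, 0 < t -> cont_at_vec n epsT t -> forall i, (i < n)%nat ->
     exists d, derivable_pt_lim (fun s => epsf s i) t d /\ k * d + epsf t i = epsT t i) ->
  forall (Pi K y1 : R -> mat),
  (forall t, 0 <= t -> forall i j, (i < p)%nat -> (j < p)%nat ->
     is_integral (fun s => exp (- l * (t - s)) * (Phif s i * Phif s j)) 0 t (Pi t i j)) ->
  (forall t, 0 <= t -> forall i j, (i < p)%nat -> (j < n)%nat ->
     is_integral (fun s => exp (- l * (t - s)) * (Phif s i * xfd s j)) 0 t (K t i j)) ->
  (forall t, 0 <= t -> forall i j, (i < p)%nat -> (j < n)%nat ->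
     is_integral (fun s => exp (- l * (t - s)) * (Phif s i * epsf s j)) 0 t (- y1 t i j)) ->
  (* recorded times t_1..t_N  (indexed 0..N-1) *)
  forall (N : nat) (ts : nat -> R), (p <= N)%nat ->
  (forall q, (q < N)%nat -> 0 <= ts q) ->
  forall (Gamma Ginv : mat),
  symmetric p Gamma -> pos_def p Gamma -> is_inverse p Gamma Ginv ->
  persistently_exciting p Phi ->
  forall (T1 lam0 : R), 0 < T1 -> 0 < lam0 ->
  (forall t, T1 <= t ->
     lambda_min_ge p (madd (Pi t) (msum N (fun q => Pi (ts q)))) lam0) ->
  (* (i) *)
  ((forall t, 0 <= t -> forall i, (i < n)%nat -> epsT t i = 0) ->
   forall What : R -> mat, estimator_law p n Gamma Pi K N ts What ->
     (forall t, T1 <= t -> exists d,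
        derivable_pt_lim (fun s => V1 p n Ginv (msub W1 (What s))) t d /\
        d <= - lam0 * (frob p n (msub W1 (What t))) ^ 2) /\
     (forall e, 0 < e -> exists T, forall t, T <= t ->
        frob p n (msub W1 (What t)) < e))
  /\
  (* (ii) *)
  (exists nu1, 0 <= nu1 /\
     (forall t, 0 <= t ->
        frob p n (madd (y1 t) (msum N (fun q => y1 (ts q)))) <= nu1) /\
     exists b, forall What : R -> mat, estimator_law p n Gamma Pi K N ts What ->
       (forall t, T1 <= t -> exists d,
          derivable_pt_lim (fun s => V1 p n Ginv (msub W1 (What s))) t d /\
          d <= - lam0 * (frob p n (msub W1 (What t))) ^ 2
               + nu1 * frob p n (msub W1 (What t)) /\
          (nu1 / lam0 < frob p n (msub W1 (What t)) -> d < 0)) /\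
       (exists T, forall t, T <= t -> frob p n (msub W1 (What t)) <= b)).
Proof.
  intros p W1 Phi epsT x p1 p2 HPhi_pc HepsT_pc HPhi_bd HepsT_bd Hx_cont Hx_dyn k l Hk Hl
    Phif xf xfd epsf HPhif_cont HPhif_init HPhif_ode Hxf_cont Hxf_init Hxf_ode
    Hepsf_cont Hepsf_init Hepsf_ode Pi K y1 HPi HK Hy1 N ts _ Hts Gamma Ginv
    HGamma_sym HGamma_pd HGamma_inv _ T1 lam0 HT1 Hlam0 HP_lambda.
  split.
  - eapply estimation_error_converges with (x := x) (p1 := p1) (k := k) (l := l)
      (Phif := Phif) (xf := xf) (xfd := xfd) (epsf := epsf); eauto.
  - eapply estimation_error_uub with (Phi := Phi) (epsT := epsT) (x := x) (p1 := p1)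
      (p2 := p2) (k := k) (l := l) (Phif := Phif) (xf := xf) (xfd := xfd) (epsf := epsf);
      eauto.
Qed.
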